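(* Let $U$ be the open unit disc centred at the origin of $\mathbb{R}^2$, $f\colon\partial U\to\mathbb{R}$, and suppose $G_f(t)=f(e^{it})$ is Laplace integrable on $[-\pi,\pi]$. Then for every $(r,\theta)\in[0,1)\times[-\pi,\pi]$ the Laplace integral \[F(r,\theta)=\frac{1}{2\pi}\int_{-\pi}^{\pi}G_f(t)P_r(\theta-t)\,dt,\qquad P_r(u)=\frac{1-r^2}{1-2r\cos u+r^2},\] is well defined, and the function $re^{i\theta}\mapsto F(r,\theta)$ is harmonic on $U$.
   Context: Laplace integral on $[a,b]$: with lower/upper Laplace derivates $\underline{LD}_1F(x)$, $\overline{LD}_1F(x)$ being the minimum of the $\liminf$'s, resp. maximum of the $\limsup$'s, as $s\to\infty$ of $s^2\int_0^\delta e^{-st}[F(x+t)-F(x)]dt$ and $(-s^2)\int_0^\delta e^{-st}[F(x-t)-F(x)]dt$ (one-sided at endpoints), a major function of $h$ is a continuous $W$ with $\underline{LD}_1W\geqslant h$, $\underline{LD}_1W>-\infty$ everywhere on $[a,b]$, a minor function a continuous $V$ with $\overline{LD}_1V\leqslant h$, $\overline{LD}_1V<\infty$ everywhere, and $h$ is Laplace integrable if $\sup_V(V(b)-V(a))=\inf_W(W(b)-W(a))$ is finite, the value being $\int_a^bh$. *)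

From Stdlib Require Import Reals Lra.
From Coquelicot Require Import Coquelicot.
Open Scope R_scope.

Definition liminf_pinfty (g : R -> R) : Rbar :=
  Rbar_lub (fun y => exists M : R, y = Glb_Rbar (fun z => exists s, M <= s /\ z = g s)).
Definition limsup_pinfty (g : R -> R) : Rbar :=
  Rbar_glb (fun y => exists M : R, y = Lub_Rbar (fun z => exists s, M <= s /\ z = g s)).

Definition Rbar_max2 (x y : Rbar) : Rbar :=
  Rbar_opp (Rbar_min (Rbar_opp x) (Rbar_opp y)).

Definition laplace_right (F : R -> R) (x delta : R) (s : R) : R :=
  s ^ 2 * RInt (fun t => exp (- (s * t)) * (F (x + t) - F x)) 0 delta.
Definition laplace_left (F : R -> R) (x delta : R) (s : R) : R :=
  (- s ^ 2) * RInt (fun t => exp (- (s * t)) * (F (x - t) - F x)) 0 delta.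

(** Lower / upper Laplace derivates of F at x relative to [a,b]; at interior
    points both sides are used (min of liminfs / max of limsups), at the
    endpoints only the one-sided one.  delta is taken as the distance to the
    relevant endpoint (the value does not depend on delta > 0 for continuous F). *)
Definition lower_LD (a b : R) (F : R -> R) (x : R) : Rbar :=
  match Rlt_dec a x, Rlt_dec x b with
  | left _, left _ => Rbar_min (liminf_pinfty (laplace_right F x (b - x)))
                               (liminf_pinfty (laplace_left F x (x - a)))
  | right _, _ => liminf_pinfty (laplace_right F x (b - x))
  | left _, right _ => liminf_pinfty (laplace_left F x (x - a))
  end.
Definition upper_LD (a b : R) (F : R -> R) (x : R) : Rbar :=
  match Rlt_dec a x, Rlt_dec x b with
  | left _, left _ => Rbar_max2 (limsup_pinfty (laplace_right F x (b - x)))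
                               (limsup_pinfty (laplace_left F x (x - a)))
  | right _, _ => limsup_pinfty (laplace_right F x (b - x))
  | left _, right _ => limsup_pinfty (laplace_left F x (x - a))
  end.

Definition continuous_on_cc (a b : R) (F : R -> R) : Prop :=
  forall x, a <= x <= b ->
    filterlim F (within (fun y => a <= y <= b) (locally x)) (locally (F x)).

Definition major_function (a b : R) (h W : R -> R) : Prop :=
  continuous_on_cc a b W /\
  forall x, a <= x <= b ->
    Rbar_le (Finite (h x)) (lower_LD a b W x) /\ lower_LD a b W x <> m_infty.

Definition minor_function (a b : R) (h V : R -> R) : Prop :=
  continuous_on_cc a b V /\
  forall x, a <= x <= b ->
    Rbar_le (upper_LD a b V x) (Finite (h x)) /\ upper_LD a b V x <> p_infty.

Definition is_laplace_integral (h : R -> R) (a b I : R) : Prop :=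
  is_lub_Rbar (fun v => exists V, minor_function a b h V /\ v = V b - V a) (Finite I) /\
  is_glb_Rbar (fun w => exists W, major_function a b h W /\ w = W b - W a) (Finite I).

Definition laplace_integrable (h : R -> R) (a b : R) : Prop :=
  exists I, is_laplace_integral h a b I.

Definition poisson (r u : R) : R := (1 - r ^ 2) / (1 - 2 * r * cos u + r ^ 2).

Definition unit_disc (x y : R) : Prop := x ^ 2 + y ^ 2 < 1.

Definition dx (u : R -> R -> R) (x y : R) : R := Derive (fun t => u t y) x.
Definition dy (u : R -> R -> R) (x y : R) : R := Derive (fun t => u x t) y.

Definition harmonic_on (D : R -> R -> Prop) (u : R -> R -> R) : Prop :=
  forall x y, D x y ->
    ex_derive (fun t => u t y) x /\ ex_derive (fun t => u x t) y /\
    ex_derive (fun t => dx u t y) x /\ ex_derive (fun t => dx u x t) y /\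
    ex_derive (fun t => dy u t y) x /\ ex_derive (fun t => dy u x t) y /\
    continuous (fun p : R * R => dx (dx u) (fst p) (snd p)) (x, y) /\
    continuous (fun p : R * R => dy (dx u) (fst p) (snd p)) (x, y) /\
    continuous (fun p : R * R => dx (dy u) (fst p) (snd p)) (x, y) /\
    continuous (fun p : R * R => dy (dy u) (fst p) (snd p)) (x, y) /\
    dx (dx u) x y + dy (dy u) x y = 0.

(* Looking at a maximum of W - V + eps (t - x)
   shows that W - V is nondecreasing, so increments of major functions dominate those of minor
   functions.

   If W is a major function of h and phi > 0 is C^1, then W phi - int_a^x W phi' is a major
   function of h phi: its increments are phi(p) (W(p+t) - W(p)) + o(t), and the positive factor
   phi(p) passes through the Laplace derivates.  Approximating the indefinite Laplace integral
   Phi of h uniformly by major and minor functions then gives the integration by parts formula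
   int_a^b h phi = I phi(b) - int_a^b Phi phi', where I = int_a^b h and Phi is continuous.

   For phi(t) = P_r(theta - t) = Re ((e^(it) + z) / (e^(it) - z)), z = r e^(i theta), this writes
   the Poisson integral of G_f as (I P(z, -1) - int Phi(t) d/dt P(z, e^(it)) dt) / (2 pi).  The
   integrand is the real part of a rational function of z without poles in the disc, hence
   harmonic in z, and differentiating under the integral sign shows that the integral is harmonic. *)

From Stdlib Require Import Reals Lra Classical ClassicalEpsilon FunctionalExtensionality.
From Coquelicot Require Import Coquelicot.
Open Scope R_scope.

Lemma liminf_pinfty_gt_eventually (g : R -> R) (c c' : R) :
  Rbar_le (Finite c) (liminf_pinfty g) -> c' < c ->
  exists M, forall s, M <= s -> c' < g s.
Proof.
  intros Hc Hc'.
  apply NNPP; intros Hnot.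
  assert (Hub : Rbar_le (liminf_pinfty g) (Finite c')).
  { unfold liminf_pinfty, Rbar_lub.
    destruct (Rbar_ex_lub _) as [l Hl]; cbn [proj1_sig].
    apply (proj2 Hl); intros y [M ->].
    destruct (not_all_ex_not _ _ (fun H => Hnot (ex_intro _ M H))) as [s Hs].
    apply imply_to_and in Hs; destruct Hs as [HMs Hgs].
    eapply Rbar_le_trans;
      [apply (proj1 (Glb_Rbar_correct _)); exists s; split; [exact HMs | reflexivity] |].
    simpl; lra. }
  pose proof (Rbar_le_trans _ _ _ Hc Hub); simpl in *; lra.
Qed.

Lemma limsup_pinfty_lt_eventually (g : R -> R) (c c' : R) :
  Rbar_le (limsup_pinfty g) (Finite c) -> c < c' ->
  exists M, forall s, M <= s -> g s < c'.
Proof.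
  intros Hc Hc'.
  apply NNPP; intros Hnot.
  assert (Hlb : Rbar_le (Finite c') (limsup_pinfty g)).
  { unfold limsup_pinfty, Rbar_glb.
    destruct (Rbar_ex_glb _) as [l Hl]; cbn [proj1_sig].
    apply (proj2 Hl); intros y [M ->].
    destruct (not_all_ex_not _ _ (fun H => Hnot (ex_intro _ M H))) as [s Hs].
    apply imply_to_and in Hs; destruct Hs as [HMs Hgs].
    eapply Rbar_le_trans;
      [| apply (proj1 (Lub_Rbar_correct _)); exists s; split; [exact HMs | reflexivity]].
    simpl; lra. }
  pose proof (Rbar_le_trans _ _ _ Hlb Hc); simpl in *; lra.
Qed.

Lemma le_liminf_pinfty (g : R -> R) (c : R) :
  (forall c', c' < c -> exists M, forall s, M <= s -> c' <= g s) ->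
  Rbar_le (Finite c) (liminf_pinfty g).
Proof.
  intros H.
  assert (Hc : forall c', c' < c -> Rbar_le (Finite c') (liminf_pinfty g)).
  { intros c' Hc'; destruct (H c' Hc') as [M HM].
    unfold liminf_pinfty, Rbar_lub.
    destruct (Rbar_ex_lub _) as [l Hl]; cbn [proj1_sig].
    eapply Rbar_le_trans; [| apply (proj1 Hl); exists M; reflexivity].
    apply (proj2 (Glb_Rbar_correct _)); intros z [s [Hs ->]]; apply HM, Hs. }
  destruct (liminf_pinfty g) as [l | |]; simpl; auto.
  - destruct (Rle_lt_dec c l) as [Hle | Hlt]; [exact Hle |].
    specialize (Hc ((l + c) / 2) ltac:(lra)); simpl in Hc; lra.
  - exact (Hc (c - 1) ltac:(lra)).
Qed.

Lemma limsup_pinfty_le (g : R -> R) (c : R) :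
  (forall c', c < c' -> exists M, forall s, M <= s -> g s <= c') ->
  Rbar_le (limsup_pinfty g) (Finite c).
Proof.
  intros H.
  assert (Hc : forall c', c < c' -> Rbar_le (limsup_pinfty g) (Finite c')).
  { intros c' Hc'; destruct (H c' Hc') as [M HM].
    unfold limsup_pinfty, Rbar_glb.
    destruct (Rbar_ex_glb _) as [l Hl]; cbn [proj1_sig].
    eapply Rbar_le_trans; [apply (proj1 Hl); exists M; reflexivity |].
    apply (proj2 (Lub_Rbar_correct _)); intros z [s [Hs ->]]; apply HM, Hs. }
  destruct (limsup_pinfty g) as [l | |]; simpl; auto.
  - destruct (Rle_lt_dec l c) as [Hle | Hlt]; [exact Hle |].
    specialize (Hc ((l + c) / 2) ltac:(lra)); simpl in Hc; lra.
  - exact (Hc (c + 1) ltac:(lra)).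
Qed.

Definition vanishes_at_pinfty (r : R -> R) : Prop :=
  forall eps, 0 < eps -> exists M, forall s, M <= s -> Rabs (r s) <= eps.

Lemma vanishes_at_pinfty_opp (r : R -> R) :
  vanishes_at_pinfty r -> vanishes_at_pinfty (fun s => - r s).
Proof.
  intros H eps Heps; destruct (H eps Heps) as [M HM].
  exists M; intros s Hs; rewrite Rabs_Ropp; auto.
Qed.

Lemma eventually_and (P Q : R -> Prop) :
  (exists M, forall s, M <= s -> P s) -> (exists M, forall s, M <= s -> Q s) ->
  exists M, forall s, M <= s -> P s /\ Q s.
Proof.
  intros [M1 H1] [M2 H2]; exists (Rmax M1 M2); intros s Hs; split.
  - apply H1; eapply Rle_trans; [apply Rmax_l | exact Hs].
  - apply H2; eapply Rle_trans; [apply Rmax_r | exact Hs].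
Qed.

Lemma liminf_pinfty_affine (g1 g2 r : R -> R) (k c : R) :
  0 < k -> vanishes_at_pinfty r -> (forall s, g2 s = k * g1 s + r s) ->
  Rbar_le (Finite c) (liminf_pinfty g1) -> Rbar_le (Finite (k * c)) (liminf_pinfty g2).
Proof.
  intros Hk Hr Hg Hc; apply le_liminf_pinfty; intros c' Hc'.
  set (e := (k * c - c') / 2).
  destruct (liminf_pinfty_gt_eventually g1 c (c - e / k) Hc) as [M1 HM1].
  { assert (0 < e / k) by (apply Rdiv_lt_0_compat; unfold e; lra); lra. }
  destruct (Hr e ltac:(unfold e; lra)) as [M2 HM2].
  exists (Rmax M1 M2); intros s Hs; rewrite Hg.
  specialize (HM1 s (Rle_trans _ _ _ (Rmax_l _ _) Hs)).
  specialize (HM2 s (Rle_trans _ _ _ (Rmax_r _ _) Hs)); apply Rabs_le_between in HM2.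
  assert (k * (c - e / k) <= k * g1 s) by (apply Rmult_le_compat_l; lra).
  assert (k * (c - e / k) = k * c - e) by (field; lra).
  unfold e in *; lra.
Qed.

Lemma limsup_pinfty_affine (g1 g2 r : R -> R) (k c : R) :
  0 < k -> vanishes_at_pinfty r -> (forall s, g2 s = k * g1 s + r s) ->
  Rbar_le (limsup_pinfty g1) (Finite c) -> Rbar_le (limsup_pinfty g2) (Finite (k * c)).
Proof.
  intros Hk Hr Hg Hc; apply limsup_pinfty_le; intros c' Hc'.
  set (e := (c' - k * c) / 2).
  destruct (limsup_pinfty_lt_eventually g1 c (c + e / k) Hc) as [M1 HM1].
  { assert (0 < e / k) by (apply Rdiv_lt_0_compat; unfold e; lra); lra. }
  destruct (Hr e ltac:(unfold e; lra)) as [M2 HM2].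
  exists (Rmax M1 M2); intros s Hs; rewrite Hg.
  specialize (HM1 s (Rle_trans _ _ _ (Rmax_l _ _) Hs)).
  specialize (HM2 s (Rle_trans _ _ _ (Rmax_r _ _) Hs)); apply Rabs_le_between in HM2.
  assert (k * g1 s <= k * (c + e / k)) by (apply Rmult_le_compat_l; lra).
  assert (k * (c + e / k) = k * c + e) by (field; lra).
  unfold e in *; lra.
Qed.

Lemma Rbar_le_min (c : R) (x y : Rbar) :
  Rbar_le (Finite c) (Rbar_min x y) <-> Rbar_le (Finite c) x /\ Rbar_le (Finite c) y.
Proof.
  destruct x as [x | |], y as [y | |]; simpl; try tauto.
  unfold Rmin; destruct (Rle_dec x y); split; intros; lra.
Qed.

Lemma Rbar_max2_le (c : R) (x y : Rbar) :
  Rbar_le (Rbar_max2 x y) (Finite c) <-> Rbar_le x (Finite c) /\ Rbar_le y (Finite c).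
Proof.
  unfold Rbar_max2.
  destruct x as [x | |], y as [y | |]; simpl; try tauto.
  all: try (unfold Rmin; destruct (Rle_dec (- x) (- y)); split; intros; lra).
  all: rewrite Ropp_involutive; tauto.
Qed.

Definition continuous_R (g : R -> R) : Prop := forall x, continuous g x.

Lemma continuous_R_plus f g : continuous_R f -> continuous_R g -> continuous_R (fun x => f x + g x).
Proof. intros Hf Hg x; apply (continuous_plus f g); auto. Qed.
Lemma continuous_R_minus f g : continuous_R f -> continuous_R g -> continuous_R (fun x => f x - g x).
Proof. intros Hf Hg x; apply (continuous_minus f g); auto. Qed.
Lemma continuous_R_mult f g : continuous_R f -> continuous_R g -> continuous_R (fun x => f x * g x).
Proof. intros Hf Hg x; apply (continuous_mult f g); auto. Qed.
Lemma continuous_R_opp f : continuous_R f -> continuous_R (fun x => - f x).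
Proof. intros Hf x; apply (continuous_opp f); auto. Qed.
Lemma continuous_R_comp f g : continuous_R f -> continuous_R g -> continuous_R (fun x => f (g x)).
Proof. intros Hf Hg x; apply (continuous_comp g f); auto. Qed.
Lemma continuous_R_const c : continuous_R (fun _ => c).
Proof. intros x; apply continuous_const. Qed.
Lemma continuous_R_id : continuous_R (fun x => x).
Proof. intros x; apply continuous_id. Qed.
Lemma continuous_R_exp : continuous_R exp.
Proof. intros x; apply continuous_exp. Qed.
Lemma continuous_R_cos : continuous_R cos.
Proof. intros x; apply continuous_cos. Qed.
Lemma continuous_R_sin : continuous_R sin.
Proof. intros x; apply continuous_sin. Qed.

Lemma continuous_R_shift_right F p : continuous_R F -> continuous_R (fun t => F (p + t) - F p).
Proof.
  intros HF; apply continuous_R_minus; [| apply continuous_R_const].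
  apply continuous_R_comp; [exact HF |].
  apply continuous_R_plus; [apply continuous_R_const | apply continuous_R_id].
Qed.

Lemma continuous_R_shift_left F p : continuous_R F -> continuous_R (fun t => F (p - t) - F p).
Proof.
  intros HF; apply continuous_R_minus; [| apply continuous_R_const].
  apply continuous_R_comp; [exact HF |].
  apply continuous_R_minus; [apply continuous_R_const | apply continuous_R_id].
Qed.

Ltac solve_continuous_R :=
  unfold Rdiv;
  repeat match goal with
  | H : continuous_R ?f |- continuous_R ?f => exact H
  | H : continuous_R ?f |- continuous_R (fun x => ?f x) => exact H
  | |- continuous_R (fun _ => ?c) => apply continuous_R_const
  | |- continuous_R (fun x => x) => apply continuous_R_id
  | |- continuous_R exp => exact continuous_R_exp
  | |- continuous_R cos => exact continuous_R_cos
  | |- continuous_R sin => exact continuous_R_sin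
  | H : continuous_R ?F |- continuous_R (fun t => ?F (?p + t) - ?F ?p) =>
      exact (continuous_R_shift_right F p H)
  | H : continuous_R ?F |- continuous_R (fun t => ?F (?p - t) - ?F ?p) =>
      exact (continuous_R_shift_left F p H)
  | |- continuous_R (fun x => @?f x + @?g x) => apply (continuous_R_plus f g)
  | |- continuous_R (fun x => @?f x - @?g x) => apply (continuous_R_minus f g)
  | |- continuous_R (fun x => @?f x * @?g x) => apply (continuous_R_mult f g)
  | |- continuous_R (fun x => - @?f x) => apply (continuous_R_opp f)
  | |- continuous_R (fun x => exp (@?g x)) => apply (continuous_R_comp exp g continuous_R_exp)
  | |- continuous_R (fun x => cos (@?g x)) => apply (continuous_R_comp cos g continuous_R_cos)
  | |- continuous_R (fun x => sin (@?g x)) => apply (continuous_R_comp sin g continuous_R_sin)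
  | |- continuous_R (fun x => ?F (@?g x)) => apply (continuous_R_comp F g)
  end.

Lemma ex_RInt_continuous_R (f : R -> R) a b : continuous_R f -> ex_RInt f a b.
Proof. intros Hf; apply (ex_RInt_continuous (V := R_CompleteNormedModule)); intros; apply Hf. Qed.

Lemma RInt_ext_R (f g : R -> R) a b :
  (forall x, Rmin a b < x < Rmax a b -> f x = g x) -> RInt f a b = RInt g a b.
Proof. apply RInt_ext. Qed.

Lemma continuous_R_bounded F u v :
  u <= v -> continuous_R F -> exists B, 0 <= B /\ forall t, u <= t <= v -> Rabs (F t) <= B.
Proof.
  intros Huv HF.
  destruct (continuous_ab_maj_consistent F u v Huv (fun c _ => HF c)) as [m1 [Hm1 _]].
  destruct (continuous_ab_min_consistent F u v Huv (fun c _ => HF c)) as [m2 [Hm2 _]].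
  exists (Rabs (F m1) + Rabs (F m2)); split;
    [pose proof (Rabs_pos (F m1)); pose proof (Rabs_pos (F m2)); lra |]; intros t Ht.
  specialize (Hm1 t Ht); specialize (Hm2 t Ht).
  unfold Rabs; repeat destruct Rcase_abs; lra.
Qed.

(** * The Laplace transform near zero *)

Definition laplace_transform (g : R -> R) (d s : R) : R :=
  s ^ 2 * RInt (fun t => exp (- (s * t)) * g t) 0 d.

Lemma continuous_R_laplace_integrand g s :
  continuous_R g -> continuous_R (fun t => exp (- (s * t)) * g t).
Proof. intros Hg; solve_continuous_R. Qed.

Lemma ex_RInt_laplace_integrand g s a b :
  continuous_R g -> ex_RInt (fun t => exp (- (s * t)) * g t) a b.
Proof. intros Hg; apply ex_RInt_continuous_R, continuous_R_laplace_integrand, Hg. Qed.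

Lemma laplace_transform_ext g1 g2 d s :
  (forall t, Rmin 0 d < t < Rmax 0 d -> g1 t = g2 t) ->
  laplace_transform g1 d s = laplace_transform g2 d s.
Proof.
  intros H; unfold laplace_transform; f_equal.
  apply RInt_ext_R; intros t Ht; rewrite H; auto.
Qed.

Lemma laplace_transform_plus g1 g2 d s :
  continuous_R g1 -> continuous_R g2 ->
  laplace_transform (fun t => g1 t + g2 t) d s = laplace_transform g1 d s + laplace_transform g2 d s.
Proof.
  intros H1 H2; unfold laplace_transform.
  rewrite (RInt_ext_R (fun t => exp (- (s * t)) * (g1 t + g2 t))
                   (fun t => exp (- (s * t)) * g1 t + exp (- (s * t)) * g2 t))
    by (intros; ring).
  rewrite (RInt_plus (fun t => exp (- (s * t)) * g1 t) (fun t => exp (- (s * t)) * g2 t))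
    by (apply ex_RInt_laplace_integrand; auto).
  change (plus ?u ?v) with (u + v); ring.
Qed.

Lemma laplace_transform_scal g k d s :
  continuous_R g -> laplace_transform (fun t => k * g t) d s = k * laplace_transform g d s.
Proof.
  intros H; unfold laplace_transform.
  rewrite (RInt_ext_R (fun t => exp (- (s * t)) * (k * g t)) (fun t => k * (exp (- (s * t)) * g t)))
    by (intros; ring).
  rewrite (RInt_scal (fun t => exp (- (s * t)) * g t))
    by (apply ex_RInt_laplace_integrand; auto).
  change (scal ?u ?v) with (u * v); ring.
Qed.

Lemma laplace_transform_minus g1 g2 d s :
  continuous_R g1 -> continuous_R g2 ->
  laplace_transform (fun t => g1 t - g2 t) d s = laplace_transform g1 d s - laplace_transform g2 d s.
Proof.
  intros H1 H2.
  rewrite (laplace_transform_ext (fun t => g1 t - g2 t) (fun t => g1 t + (-1) * g2 t))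
    by (intros; ring).
  rewrite laplace_transform_plus, laplace_transform_scal by solve_continuous_R; ring.
Qed.

Lemma laplace_transform_nonpos g d s :
  0 <= d -> continuous_R g -> (forall t, 0 <= t <= d -> g t <= 0) -> laplace_transform g d s <= 0.
Proof.
  intros Hd Hg Hneg; unfold laplace_transform.
  assert (Hint : RInt (fun t => exp (- (s * t)) * g t) 0 d <= RInt (fun _ => 0) 0 d).
  { apply RInt_le; auto.
    - apply ex_RInt_laplace_integrand, Hg.
    - apply ex_RInt_const.
    - intros t Ht; pose proof (exp_pos (- (s * t))); specialize (Hneg t ltac:(lra)); nra. }
  rewrite RInt_const in Hint; change (scal ?u ?v) with (u * v) in Hint.
  pose proof (pow2_ge_0 s); nra.
Qed.

Lemma exp_le_compat x y : x <= y -> exp x <= exp y.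
Proof.
  intros H; destruct (Req_dec x y) as [-> | Hne]; [lra |].
  left; apply exp_increasing; lra.
Qed.

Lemma laplace_transform_tail g eta d s B :
  0 <= eta <= d -> 0 <= s -> continuous_R g -> (forall t, eta <= t <= d -> Rabs (g t) <= B) ->
  Rabs (laplace_transform g d s - laplace_transform g eta s)
    <= B * (d - eta) * (s ^ 2 * exp (- (s * eta))).
Proof.
  intros Hd Hs Hg HB; unfold laplace_transform.
  rewrite <- (RInt_Chasles _ 0 eta d) by (apply ex_RInt_laplace_integrand; auto).
  change (plus ?u ?v) with (u + v).
  match goal with |- Rabs (s ^ 2 * (?I1 + ?I2) - s ^ 2 * ?I1) <= _ =>
    replace (s ^ 2 * (I1 + I2) - s ^ 2 * I1) with (s ^ 2 * I2) by ring end.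
  rewrite Rabs_mult, (Rabs_right (s ^ 2)) by (apply Rle_ge, pow2_ge_0).
  assert (Htail : Rabs (RInt (fun t => exp (- (s * t)) * g t) eta d)
                  <= (d - eta) * (exp (- (s * eta)) * B)).
  { apply abs_RInt_le_const; try lra; [apply ex_RInt_laplace_integrand; auto |].
    intros t Ht; rewrite Rabs_mult, Rabs_right by (apply Rle_ge, Rlt_le, exp_pos).
    apply Rmult_le_compat; try apply Rlt_le, exp_pos; try apply Rabs_pos; [| apply HB; lra].
    apply exp_le_compat; nra. }
  pose proof (pow2_ge_0 s); nra.
Qed.

Lemma is_RInt_exp_mul_id s a b : s <> 0 ->
  is_RInt (fun t => exp (- (s * t)) * t) a b
    (- (b / s + 1 / s ^ 2) * exp (- (s * b)) - - (a / s + 1 / s ^ 2) * exp (- (s * a))).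
Proof.
  intros Hs.
  apply (is_RInt_derive (fun t => - (t / s + 1 / s ^ 2) * exp (- (s * t)))).
  - intros x _; auto_derive; auto; field; auto.
  - intros x _; apply (continuous_R_laplace_integrand (fun t => t)), continuous_R_id.
Qed.

Lemma laplace_transform_id d s : 0 < s ->
  laplace_transform (fun t => t) d s = 1 - exp (- (s * d)) * (1 + s * d).
Proof.
  intros Hs; unfold laplace_transform.
  rewrite (is_RInt_unique _ _ _ _ (is_RInt_exp_mul_id s 0 d ltac:(lra))).
  rewrite Rmult_0_r, Ropp_0, exp_0; field; lra.
Qed.

Lemma laplace_transform_id_le_1 d s : 0 <= d -> 0 < s -> laplace_transform (fun t => t) d s <= 1.
Proof.
  intros Hd Hs; rewrite laplace_transform_id by lra.
  pose proof (exp_pos (- (s * d))); assert (0 <= s * d) by nra; nra.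
Qed.

Lemma laplace_transform_small g eta s k :
  0 <= eta -> 0 <= k -> 0 < s -> continuous_R g ->
  (forall t, 0 <= t <= eta -> Rabs (g t) <= k * t) -> Rabs (laplace_transform g eta s) <= k.
Proof.
  intros He Hk Hs Hg HB.
  assert (Hint : Rabs (RInt (fun t => exp (- (s * t)) * g t) 0 eta)
                 <= RInt (fun t => k * (exp (- (s * t)) * t)) 0 eta).
  { eapply Rle_trans; [apply abs_RInt_le; auto; apply ex_RInt_laplace_integrand, Hg |].
    apply RInt_le; auto.
    - apply ex_RInt_continuous_R, (continuous_R_comp Rabs);
        [intros x; apply continuous_Rabs | apply continuous_R_laplace_integrand, Hg].
    - apply ex_RInt_continuous_R; apply continuous_R_mult;
        [apply continuous_R_const | apply (continuous_R_laplace_integrand (fun t => t)), continuous_R_id].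
    - intros t Ht; rewrite Rabs_mult, Rabs_right by (apply Rle_ge, Rlt_le, exp_pos).
      specialize (HB t ltac:(lra)); pose proof (exp_pos (- (s * t))); nra. }
  rewrite (RInt_scal (fun t => exp (- (s * t)) * t))
    in Hint by (apply ex_RInt_laplace_integrand, continuous_R_id).
  change (scal ?u ?v) with (u * v) in Hint.
  pose proof (laplace_transform_id_le_1 eta s He Hs) as Hid; unfold laplace_transform in *.
  rewrite Rabs_mult, (Rabs_right (s ^ 2)) by (apply Rle_ge, pow2_ge_0).
  pose proof (pow2_ge_0 s); nra.
Qed.

Lemma cube_le_exp u : 0 <= u -> (u / 3) ^ 3 <= exp u.
Proof.
  intros Hu.
  replace u with (u / 3 + u / 3 + u / 3) at 2 by field.
  rewrite !exp_plus.
  pose proof (exp_ineq1_le (u / 3)).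
  assert (u / 3 * (u / 3) <= exp (u / 3) * exp (u / 3)) by (apply Rmult_le_compat; lra).
  simpl; rewrite Rmult_1_r, <- Rmult_assoc.
  apply Rmult_le_compat; try lra; apply Rmult_le_pos; lra.
Qed.

Lemma sq_mul_exp_neg_vanishes eta C : 0 < eta -> forall eps, 0 < eps ->
  exists M, 0 < M /\ forall s, M <= s -> C * (s ^ 2 * exp (- (s * eta))) <= eps.
Proof.
  intros He eps Heps.
  set (C' := Rabs C + 1).
  assert (HC' : 0 < C') by (unfold C'; pose proof (Rabs_pos C); lra).
  assert (Heta3 : 0 < eta ^ 3) by (apply pow_lt; lra).
  set (M := 27 * C' / (eta ^ 3 * eps)).
  assert (HM : 0 < M) by (unfold M; apply Rdiv_lt_0_compat; try apply Rmult_lt_0_compat; lra).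
  exists (M + 1); split; [lra |]; intros s Hs.
  assert (Hcube := cube_le_exp (s * eta) ltac:(nra)).
  assert (Hcube0 : 0 < (s * eta / 3) ^ 3) by (apply pow_lt; nra).
  rewrite exp_Ropp.
  assert (Hb : s ^ 2 * / exp (s * eta) <= 27 / (eta ^ 3 * s)).
  { apply Rle_trans with (s ^ 2 * / ((s * eta / 3) ^ 3)).
    - apply Rmult_le_compat_l; [apply pow2_ge_0 | apply Rinv_le_contravar; auto].
    - right; field; lra. }
  assert (Hpos : 0 <= s ^ 2 * / exp (s * eta))
    by (apply Rmult_le_pos; [apply pow2_ge_0 | apply Rlt_le, Rinv_0_lt_compat, exp_pos]).
  assert (HCle : C <= C') by (unfold C'; pose proof (Rle_abs C); lra).
  assert (Hfin : C' * (27 / (eta ^ 3 * s)) <= eps).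
  { replace (C' * (27 / (eta ^ 3 * s))) with (M * eps / s) by (unfold M; field; lra).
    apply Rmult_le_reg_r with s; [lra |].
    replace (M * eps / s * s) with (M * eps) by (field; lra); nra. }
  nra.
Qed.

Lemma laplace_transform_vanishes g d B :
  0 < d -> continuous_R g -> (forall t, 0 <= t <= d -> Rabs (g t) <= B) ->
  (forall k, 0 < k -> exists eta, 0 < eta <= d /\ forall t, 0 <= t <= eta -> Rabs (g t) <= k * t) ->
  vanishes_at_pinfty (laplace_transform g d).
Proof.
  intros Hd Hg HB Hsmall eps Heps.
  destruct (Hsmall (eps / 2) ltac:(lra)) as [eta [Heta Ht]].
  destruct (sq_mul_exp_neg_vanishes eta (B * (d - eta)) ltac:(lra) (eps / 2) ltac:(lra))
    as [M [HM HMs]].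
  exists M; intros s Hs.
  pose proof (laplace_transform_small g eta s (eps / 2) ltac:(lra) ltac:(lra) ltac:(lra) Hg Ht).
  pose proof (laplace_transform_tail g eta d s B ltac:(lra) ltac:(lra) Hg
                ltac:(intros; apply HB; lra)) as Htail.
  specialize (HMs s Hs).
  pose proof (Rabs_triang (laplace_transform g d s - laplace_transform g eta s)
                          (laplace_transform g eta s)) as Htri.
  replace (laplace_transform g d s - laplace_transform g eta s + laplace_transform g eta s)
    with (laplace_transform g d s) in Htri by ring.
  rewrite Rmult_assoc in HMs, Htail; lra.
Qed.

Lemma laplace_transform_id_tends_1 d : 0 < d -> forall eps, 0 < eps ->
  exists M, forall s, M <= s -> 1 - eps <= laplace_transform (fun t => t) d s.
Proof.
  intros Hd eps He.
  destruct (sq_mul_exp_neg_vanishes d (1 + d) Hd eps He) as [M [HM HMs]].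
  exists (Rmax M 1); intros s Hs.
  assert (Hs1 : 1 <= s) by (eapply Rle_trans; [apply Rmax_r | exact Hs]).
  specialize (HMs s (Rle_trans _ _ _ (Rmax_l _ _) Hs)).
  rewrite laplace_transform_id by lra.
  assert (Hpoly : 1 + s * d <= (1 + d) * s ^ 2).
  { assert (s <= s ^ 2) by nra; assert (s * d <= s ^ 2 * d) by nra; nra. }
  pose proof (exp_pos (- (s * d))).
  assert (exp (- (s * d)) * (1 + s * d) <= (1 + d) * (s ^ 2 * exp (- (s * d)))) by nra.
  lra.
Qed.

(** * Major and minor functions *)

Definition clamp (a b x : R) : R := Rmax a (Rmin b x).

Definition clamp_extension (a b : R) (F : R -> R) : R -> R := fun x => F (clamp a b x).

Lemma clamp_id a b x : a <= x <= b -> clamp a b x = x.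
Proof. intros H; unfold clamp, Rmax, Rmin; repeat destruct Rle_dec; lra. Qed.

Lemma clamp_in a b x : a <= b -> a <= clamp a b x <= b.
Proof. intros H; unfold clamp, Rmax, Rmin; repeat destruct Rle_dec; lra. Qed.

Lemma clamp_lipschitz a b x y : a <= b -> Rabs (clamp a b y - clamp a b x) <= Rabs (y - x).
Proof.
  intros H; unfold clamp, Rmax, Rmin, Rabs.
  repeat destruct Rle_dec; repeat destruct Rcase_abs; lra.
Qed.

Lemma clamp_extension_id a b F y : a <= y <= b -> clamp_extension a b F y = F y.
Proof. intros H; unfold clamp_extension; rewrite clamp_id; auto. Qed.

Lemma continuous_R_clamp_extension a b F :
  a <= b -> continuous_on_cc a b F -> continuous_R (clamp_extension a b F).
Proof.
  intros Hab HF x; unfold clamp_extension, continuous.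
  apply (filterlim_comp _ _ _ (clamp a b) F _ (within (fun y => a <= y <= b) (locally (clamp a b x)))).
  - intros P [eps Heps]; exists eps; intros y Hy; apply Heps; [| apply clamp_in; auto].
    eapply Rle_lt_trans; [apply clamp_lipschitz; auto | exact Hy].
  - apply HF, clamp_in, Hab.
Qed.

Lemma continuous_on_cc_of_continuous_R a b F : continuous_R F -> continuous_on_cc a b F.
Proof. intros HF x _; eapply filterlim_filter_le_1; [apply filter_le_within | apply HF]. Qed.

Lemma Laplace_derivates_congr a b F F' x :
  (forall y, a <= y <= b -> F y = F' y) -> a <= x <= b ->
  lower_LD a b F x = lower_LD a b F' x /\ upper_LD a b F x = upper_LD a b F' x.
Proof.
  intros H Hx.
  assert (Hr : laplace_right F x (b - x) = laplace_right F' x (b - x)).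
  { apply functional_extensionality; intros s; unfold laplace_right; f_equal.
    apply RInt_ext_R; intros t Ht; rewrite Rmin_left, Rmax_right in Ht by lra.
    rewrite !H; auto; lra. }
  assert (Hl : laplace_left F x (x - a) = laplace_left F' x (x - a)).
  { apply functional_extensionality; intros s; unfold laplace_left; f_equal.
    apply RInt_ext_R; intros t Ht; rewrite Rmin_left, Rmax_right in Ht by lra.
    rewrite !H; auto; lra. }
  unfold lower_LD, upper_LD; rewrite Hr, Hl; auto.
Qed.

Lemma major_function_clamp_extension a b h W : a <= b -> major_function a b h W ->
  major_function a b h (clamp_extension a b W) /\ continuous_R (clamp_extension a b W).
Proof.
  intros Hab [Hc Hd].
  assert (Hce : continuous_R (clamp_extension a b W)) by (apply continuous_R_clamp_extension; auto).
  split; [split |]; auto; [apply continuous_on_cc_of_continuous_R, Hce |].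
  intros x Hx; rewrite (proj1 (Laplace_derivates_congr a b _ W x (clamp_extension_id a b W) Hx)).
  auto.
Qed.

Lemma minor_function_clamp_extension a b h V : a <= b -> minor_function a b h V ->
  minor_function a b h (clamp_extension a b V) /\ continuous_R (clamp_extension a b V).
Proof.
  intros Hab [Hc Hd].
  assert (Hce : continuous_R (clamp_extension a b V)) by (apply continuous_R_clamp_extension; auto).
  split; [split |]; auto; [apply continuous_on_cc_of_continuous_R, Hce |].
  intros x Hx; rewrite (proj2 (Laplace_derivates_congr a b _ V x (clamp_extension_id a b V) Hx)).
  auto.
Qed.

Lemma Laplace_derivates_add_const a b (W : R -> R) c x :
  lower_LD a b (fun y => W y + c) x = lower_LD a b W x /\
  upper_LD a b (fun y => W y + c) x = upper_LD a b W x.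
Proof.
  assert (Hr : forall d, laplace_right (fun y => W y + c) x d = laplace_right W x d).
  { intros d; apply functional_extensionality; intros s; unfold laplace_right; f_equal.
    apply RInt_ext_R; intros; ring. }
  assert (Hl : forall d, laplace_left (fun y => W y + c) x d = laplace_left W x d).
  { intros d; apply functional_extensionality; intros s; unfold laplace_left; f_equal.
    apply RInt_ext_R; intros; ring. }
  unfold lower_LD, upper_LD; rewrite !Hr, !Hl; auto.
Qed.

Lemma continuous_on_cc_add_const a b (W : R -> R) c :
  continuous_on_cc a b W -> continuous_on_cc a b (fun x => W x + c).
Proof.
  intros Hc x Hx.
  apply (filterlim_comp _ _ _ W (fun y => y + c) _ _ _ (Hc x Hx)).
  apply (continuous_plus (fun y => y) (fun _ => c)); [apply continuous_id | apply continuous_const].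
Qed.

Lemma major_function_add_const a b h W c :
  major_function a b h W -> major_function a b h (fun x => W x + c).
Proof.
  intros [Hc HW]; split; [apply continuous_on_cc_add_const, Hc |].
  intros x Hx; rewrite (proj1 (Laplace_derivates_add_const a b W c x)); auto.
Qed.

Lemma minor_function_add_const a b h V c :
  minor_function a b h V -> minor_function a b h (fun x => V x + c).
Proof.
  intros [Hc HV]; split; [apply continuous_on_cc_add_const, Hc |].
  intros x Hx; rewrite (proj2 (Laplace_derivates_add_const a b V c x)); auto.
Qed.

Lemma lower_LD_le_right a b F p c : a <= p < b -> Rbar_le (Finite c) (lower_LD a b F p) ->
  Rbar_le (Finite c) (liminf_pinfty (laplace_right F p (b - p))).
Proof.
  intros Hp H; unfold lower_LD in H.
  destruct (Rlt_dec a p), (Rlt_dec p b); try lra; auto.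
  apply Rbar_le_min in H; tauto.
Qed.

Lemma upper_LD_le_right a b F p c : a <= p < b -> Rbar_le (upper_LD a b F p) (Finite c) ->
  Rbar_le (limsup_pinfty (laplace_right F p (b - p))) (Finite c).
Proof.
  intros Hp H; unfold upper_LD in H.
  destruct (Rlt_dec a p), (Rlt_dec p b); try lra; auto.
  apply Rbar_max2_le in H; tauto.
Qed.

Lemma laplace_transform_le_of_nonpos_near_0 g eta d B :
  0 < eta <= d -> continuous_R g ->
  (forall t, 0 <= t <= eta -> g t <= 0) -> (forall t, eta <= t <= d -> Rabs (g t) <= B) ->
  forall eps, 0 < eps -> exists M, forall s, M <= s -> laplace_transform g d s <= eps.
Proof.
  intros Heta Hg Hneg HB eps Heps.
  destruct (sq_mul_exp_neg_vanishes eta (B * (d - eta)) ltac:(lra) eps Heps) as [M [HM HMs]].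
  exists M; intros s Hs.
  pose proof (laplace_transform_nonpos g eta s ltac:(lra) Hg Hneg).
  pose proof (laplace_transform_tail g eta d s B ltac:(lra) ltac:(lra) Hg HB) as Htail.
  apply Rabs_le_between in Htail; specialize (HMs s Hs); lra.
Qed.

Lemma laplace_right_sub_add_linear W V eps x p d s : continuous_R W -> continuous_R V ->
  laplace_right (fun t => W t - V t + eps * (t - x)) p d s =
  laplace_right W p d s - laplace_right V p d s + eps * laplace_transform (fun t => t) d s.
Proof.
  intros HWc HVc; rewrite <- laplace_transform_scal by apply continuous_R_id.
  change (laplace_right W p d s) with (laplace_transform (fun t => W (p + t) - W p) d s).
  change (laplace_right V p d s) with (laplace_transform (fun t => V (p + t) - V p) d s).
  unfold laplace_right; fold (laplace_transform
    (fun t => (W (p + t) - V (p + t) + eps * (p + t - x)) - (W p - V p + eps * (p - x))) d s).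
  rewrite <- laplace_transform_minus, <- laplace_transform_plus by solve_continuous_R.
  apply laplace_transform_ext; intros t _; ring.
Qed.

(* At a point p < y where E = W - V + eps (t - x) is maximal on [x, y], the right Laplace
   transforms of E are eventually <= eps/8, as E does not increase on [p, y], but also
   >= eps/2 - eps/4 by the derivate bounds on W and V. *)
Lemma major_minor_increment_le_continuous a b h W V x y :
  a < b -> continuous_R W -> continuous_R V ->
  major_function a b h W -> minor_function a b h V -> a <= x -> x <= y -> y <= b ->
  V y - V x <= W y - W x.
Proof.
  intros Hab HWc HVc [_ HW] [_ HV] Hx Hxy Hy.
  apply Rnot_lt_le; intros Hlt.
  assert (Hxy' : x < y) by (destruct (Req_dec x y); [subst; lra | lra]).
  set (eps := ((W x - V x) - (W y - V y)) / (2 * (y - x))).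
  assert (Heps : 0 < eps) by (unfold eps; apply Rdiv_lt_0_compat; lra).
  set (E := fun t => W t - V t + eps * (t - x)).
  assert (HEc : continuous_R E) by (unfold E; solve_continuous_R).
  destruct (continuous_ab_maj_consistent E x y ltac:(lra) (fun c _ => HEc c)) as [p [Hmax Hp]].
  assert (HEy : E y < E x).
  { unfold E; replace (eps * (y - x)) with (((W x - V x) - (W y - V y)) / 2)
      by (unfold eps; field; lra); lra. }
  assert (Hpy : p < y) by (destruct (Req_dec p y); [subst p; specialize (Hmax x ltac:(lra)) | ]; lra).
  set (gE := fun t => E (p + t) - E p).
  assert (HgE : continuous_R gE) by (apply continuous_R_shift_right, HEc).
  destruct (HW p ltac:(lra)) as [HWp _]; destruct (HV p ltac:(lra)) as [HVp _].
  apply (lower_LD_le_right a b W p) in HWp; [| lra].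
  apply (upper_LD_le_right a b V p) in HVp; [| lra].
  destruct (continuous_R_bounded gE 0 (b - p) ltac:(lra) HgE) as [B [_ HB]].
  destruct (eventually_and _ _
    (liminf_pinfty_gt_eventually _ _ (h p - eps / 8) HWp ltac:(lra))
    (eventually_and _ _
      (limsup_pinfty_lt_eventually _ _ (h p + eps / 8) HVp ltac:(lra))
      (eventually_and _ _
        (laplace_transform_id_tends_1 (b - p) ltac:(lra) (1 / 2) ltac:(lra))
        (laplace_transform_le_of_nonpos_near_0 gE (y - p) (b - p) B ltac:(lra) HgE
          ltac:(intros t Ht; unfold gE; specialize (Hmax (p + t) ltac:(lra)); lra)
          ltac:(intros; apply HB; lra) (eps / 8) ltac:(lra)))))
    as [M HM].
  destruct (HM (Rmax M 1) (Rmax_l _ _)) as [HWs [HVs [Hid HgEs]]].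
  change (laplace_right E p (b - p) (Rmax M 1) <= eps / 8) in HgEs.
  unfold E in HgEs; rewrite laplace_right_sub_add_linear in HgEs by assumption.
  assert (eps * (1 - 1 / 2) <= eps * laplace_transform (fun t => t) (b - p) (Rmax M 1))
    by (apply Rmult_le_compat_l; lra).
  lra.
Qed.

Lemma major_minor_increment_le a b h W V x y : a < b ->
  major_function a b h W -> minor_function a b h V -> a <= x -> x <= y -> y <= b ->
  V y - V x <= W y - W x.
Proof.
  intros Hab HW HV Hx Hxy Hy.
  destruct (major_function_clamp_extension a b h W ltac:(lra) HW) as [HW' HWc].
  destruct (minor_function_clamp_extension a b h V ltac:(lra) HV) as [HV' HVc].
  pose proof (major_minor_increment_le_continuous a b h _ _ x y Hab HWc HVc HW' HV' Hx Hxy Hy) as H.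
  rewrite !clamp_extension_id in H by lra; exact H.
Qed.

(** * Integration by parts against a smooth weight *)

Lemma continuous_R_RInt_upper (f : R -> R) a : continuous_R f -> continuous_R (fun x => RInt f a x).
Proof.
  intros Hf x; apply (continuous_RInt_1 f a x (fun z => RInt f a z)).
  apply filter_forall; intros z.
  apply (RInt_correct (V := R_CompleteNormedModule)), ex_RInt_continuous_R, Hf.
Qed.

Lemma RInt_derive_R (phi phi' : R -> R) u v :
  (forall x, is_derive phi x (phi' x)) -> continuous_R phi' -> RInt phi' u v = phi v - phi u.
Proof. intros Hd Hc; apply is_RInt_unique, (is_RInt_derive phi phi'); intros; auto. Qed.

Lemma continuous_R_of_derive (phi phi' : R -> R) :
  (forall x, is_derive phi x (phi' x)) -> continuous_R phi.
Proof.
  intros Hd x; apply (ex_derive_continuous (K := R_AbsRing) (V := R_NormedModule)).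
  exists (phi' x); auto.
Qed.

Lemma abs_RInt_le_const_R (f : R -> R) c d M :
  continuous_R f -> (forall t, Rmin c d <= t <= Rmax c d -> Rabs (f t) <= M) ->
  Rabs (RInt f c d) <= Rabs (d - c) * M.
Proof.
  intros Hf HM; destruct (Rle_dec c d).
  - rewrite (Rabs_right (d - c)) by lra.
    apply abs_RInt_le_const; auto; [apply ex_RInt_continuous_R, Hf |].
    intros t Ht; apply HM; rewrite Rmin_left, Rmax_right; lra.
  - rewrite <- (opp_RInt_swap (V := R_CompleteNormedModule)) by (apply ex_RInt_continuous_R, Hf).
    change (opp ?x) with (- x); rewrite Rabs_Ropp, (Rabs_left (d - c)) by lra.
    replace (- (d - c)) with (c - d) by ring.
    apply abs_RInt_le_const; [lra | apply ex_RInt_continuous_R, Hf |].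
    intros t Ht; apply HM; rewrite Rmin_right, Rmax_left; lra.
Qed.

(* [W phi - int_a W phi'] is the primitive of [h phi] obtained by formally integrating by parts
   a primitive [W] of [h]. *)
Definition parts_primitive (a : R) (W phi phi' : R -> R) : R -> R :=
  fun x => W x * phi x - RInt (fun t => W t * phi' t) a x.

Definition parts_remainder (W phi phi' : R -> R) (p u : R) : R :=
  (W (p + u) - W p) * (phi (p + u) - phi p) - RInt (fun t => (W t - W p) * phi' t) p (p + u).

Section PartsPrimitive.
Variables (a b C : R) (W phi phi' : R -> R).
Hypotheses (HW : continuous_R W) (Hd : forall x, is_derive phi x (phi' x))
  (Hc : continuous_R phi') (HC : 0 <= C) (HCb : forall t, a <= t <= b -> Rabs (phi' t) <= C).

Let M := parts_primitive a W phi phi'.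

Lemma continuous_R_parts_primitive : continuous_R M.
Proof.
  apply continuous_R_minus;
    [apply continuous_R_mult; [| eapply continuous_R_of_derive; eauto] |
     apply continuous_R_RInt_upper; apply continuous_R_mult]; auto.
Qed.

Lemma parts_primitive_increment p u :
  M (p + u) - M p = phi p * (W (p + u) - W p) + parts_remainder W phi phi' p u.
Proof.
  unfold M, parts_primitive, parts_remainder.
  assert (Hex : forall u v, ex_RInt (fun t => W t * phi' t) u v)
    by (intros; apply ex_RInt_continuous_R, continuous_R_mult; auto).
  rewrite <- (RInt_Chasles (fun t => W t * phi' t) a p (p + u)) by auto.
  change (plus ?x ?y) with (x + y).
  rewrite (RInt_ext_R (fun t => (W t - W p) * phi' t) (fun t => W t * phi' t + (- W p) * phi' t))
    by (intros; ring).
  rewrite (RInt_plus (fun t => W t * phi' t)), (RInt_scal phi')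
    by (auto; apply ex_RInt_continuous_R; solve_continuous_R).
  change (plus ?x ?y) with (x + y); change (scal ?x ?y) with (x * y).
  rewrite (RInt_derive_R phi phi' p (p + u)) by auto; ring.
Qed.

Lemma continuous_R_parts_remainder p : continuous_R (parts_remainder W phi phi' p).
Proof.
  assert (Hphi := continuous_R_of_derive phi phi' Hd).
  assert (HI : continuous_R (fun x => RInt (fun t => (W t - W p) * phi' t) p x))
    by (apply continuous_R_RInt_upper; solve_continuous_R).
  unfold parts_remainder; solve_continuous_R.
Qed.

Lemma parts_remainder_small p : a <= p <= b ->
  forall k, 0 < k -> exists eta, 0 < eta /\ forall u, Rabs u <= eta -> a <= p + u <= b ->
    Rabs (parts_remainder W phi phi' p u) <= k * Rabs u.
Proof.
  intros Hp k Hk.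
  set (e := k / (2 * C + 1)).
  assert (He : 0 < e) by (unfold e; apply Rdiv_lt_0_compat; lra).
  destruct (proj1 (filterlim_locally W (W p)) (HW p) (mkposreal e He)) as [eta Heta].
  exists (eta / 2); split; [destruct eta; simpl; lra |]; intros u Hu Hpu.
  assert (Hbetween : forall t, Rmin p (p + u) <= t <= Rmax p (p + u) ->
                       a <= t <= b /\ Rabs (t - p) <= Rabs u).
  { intros t Ht; unfold Rmin, Rmax in Ht; destruct Rle_dec in Ht;
      unfold Rabs; repeat destruct Rcase_abs; lra. }
  assert (HWu : forall t, Rabs (t - p) <= Rabs u -> Rabs (W t - W p) <= e).
  { intros t Ht; left; apply (Heta t); change (Rabs (t - p) < eta); destruct eta; simpl in *; lra. }
  replace (Rabs u) with (Rabs (p + u - p)) in * by (f_equal; ring).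
  assert (Hphi : Rabs (phi (p + u) - phi p) <= Rabs (p + u - p) * C).
  { rewrite <- (RInt_derive_R phi phi' p (p + u)) by auto.
    apply abs_RInt_le_const_R; auto; intros t Ht; apply HCb, Hbetween, Ht. }
  assert (HI : Rabs (RInt (fun t => (W t - W p) * phi' t) p (p + u)) <= Rabs (p + u - p) * (e * C)).
  { apply abs_RInt_le_const_R; [solve_continuous_R |].
    intros t Ht; destruct (Hbetween t Ht); rewrite Rabs_mult.
    apply Rmult_le_compat; try apply Rabs_pos; auto. }
  assert (HWpu : Rabs (W (p + u) - W p) <= e) by (apply HWu; lra).
  unfold parts_remainder; eapply Rle_trans; [apply Rabs_triang |].
  rewrite Rabs_Ropp, Rabs_mult.
  assert (e * (2 * C + 1) = k) by (unfold e; field; lra).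
  pose proof (Rabs_pos (p + u - p)); pose proof (Rabs_pos (phi (p + u) - phi p)).
  pose proof (Rabs_pos (W (p + u) - W p)); nra.
Qed.

Lemma laplace_right_parts_primitive p d s :
  laplace_right M p d s =
  phi p * laplace_right W p d s + laplace_transform (parts_remainder W phi phi' p) d s.
Proof.
  assert (HR := continuous_R_parts_remainder p).
  change (laplace_right M p d s) with (laplace_transform (fun t => M (p + t) - M p) d s).
  change (laplace_right W p d s) with (laplace_transform (fun t => W (p + t) - W p) d s).
  rewrite <- laplace_transform_scal, <- laplace_transform_plus by solve_continuous_R.
  apply laplace_transform_ext; intros t _; apply parts_primitive_increment.
Qed.

Lemma laplace_left_parts_primitive p d s :
  laplace_left M p d s =
  phi p * laplace_left W p d s - laplace_transform (fun t => parts_remainder W phi phi' p (- t)) d s.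
Proof.
  assert (HR := continuous_R_parts_remainder p).
  assert (Hl : forall F, laplace_left F p d s = - laplace_transform (fun t => F (p - t) - F p) d s)
    by (intros; unfold laplace_left, laplace_transform; ring).
  rewrite !Hl.
  rewrite (laplace_transform_ext (fun t => M (p - t) - M p)
             (fun t => phi p * (W (p - t) - W p) + parts_remainder W phi phi' p (- t)))
    by (intros t _; replace (p - t) with (p + - t) by ring; apply parts_primitive_increment).
  rewrite laplace_transform_plus, laplace_transform_scal by solve_continuous_R; ring.
Qed.

Lemma laplace_parts_remainder_right_vanishes p : a <= p < b ->
  vanishes_at_pinfty (laplace_transform (parts_remainder W phi phi' p) (b - p)).
Proof.
  intros Hp.
  assert (Hrc := continuous_R_parts_remainder p).
  destruct (continuous_R_bounded _ 0 (b - p) ltac:(lra) Hrc) as [B [_ HB]].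
  apply (laplace_transform_vanishes _ _ B); auto; [lra |].
  intros k Hk; destruct (parts_remainder_small p ltac:(lra) k Hk) as [eta [Heta Hsmall]].
  exists (Rmin eta (b - p)); split; [split; [apply Rmin_glb_lt | apply Rmin_r]; lra |].
  intros t Ht; pose proof (Rmin_l eta (b - p)); pose proof (Rmin_r eta (b - p)).
  assert (Habs : Rabs t = t) by (apply Rabs_right; lra).
  rewrite <- Habs at 2; apply Hsmall; [rewrite Habs |]; lra.
Qed.

Lemma laplace_parts_remainder_left_vanishes p : a < p <= b ->
  vanishes_at_pinfty (laplace_transform (fun t => parts_remainder W phi phi' p (- t)) (p - a)).
Proof.
  intros Hp.
  assert (HR := continuous_R_parts_remainder p).
  assert (Hrc : continuous_R (fun t => parts_remainder W phi phi' p (- t))) by solve_continuous_R.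
  destruct (continuous_R_bounded _ 0 (p - a) ltac:(lra) Hrc) as [B [_ HB]].
  apply (laplace_transform_vanishes _ _ B); auto; [lra |].
  intros k Hk; destruct (parts_remainder_small p ltac:(lra) k Hk) as [eta [Heta Hsmall]].
  exists (Rmin eta (p - a)); split; [split; [apply Rmin_glb_lt | apply Rmin_r]; lra |].
  intros t Ht; pose proof (Rmin_l eta (p - a)); pose proof (Rmin_r eta (p - a)).
  assert (Habs : Rabs (- t) = t) by (rewrite Rabs_Ropp, Rabs_right; lra).
  rewrite <- Habs at 2; apply Hsmall; [rewrite Habs |]; lra.
Qed.

End PartsPrimitive.

Lemma lower_LD_transfer a b F G k c x : a < b -> a <= x <= b ->
  (x < b -> forall c, Rbar_le (Finite c) (liminf_pinfty (laplace_right F x (b - x))) ->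
     Rbar_le (Finite (k * c)) (liminf_pinfty (laplace_right G x (b - x)))) ->
  (a < x -> forall c, Rbar_le (Finite c) (liminf_pinfty (laplace_left F x (x - a))) ->
     Rbar_le (Finite (k * c)) (liminf_pinfty (laplace_left G x (x - a)))) ->
  Rbar_le (Finite c) (lower_LD a b F x) -> Rbar_le (Finite (k * c)) (lower_LD a b G x).
Proof.
  intros Hab Hx HR HL H; unfold lower_LD in *.
  destruct (Rlt_dec a x), (Rlt_dec x b).
  - apply Rbar_le_min in H; apply Rbar_le_min; split; [apply HR | apply HL]; tauto.
  - apply HL; auto.
  - apply HR; auto.
  - lra.
Qed.

Lemma upper_LD_transfer a b F G k c x : a < b -> a <= x <= b ->
  (x < b -> forall c, Rbar_le (limsup_pinfty (laplace_right F x (b - x))) (Finite c) ->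
     Rbar_le (limsup_pinfty (laplace_right G x (b - x))) (Finite (k * c))) ->
  (a < x -> forall c, Rbar_le (limsup_pinfty (laplace_left F x (x - a))) (Finite c) ->
     Rbar_le (limsup_pinfty (laplace_left G x (x - a))) (Finite (k * c))) ->
  Rbar_le (upper_LD a b F x) (Finite c) -> Rbar_le (upper_LD a b G x) (Finite (k * c)).
Proof.
  intros Hab Hx HR HL H; unfold upper_LD in *.
  destruct (Rlt_dec a x), (Rlt_dec x b).
  - apply Rbar_max2_le in H; apply Rbar_max2_le; split; [apply HR | apply HL]; tauto.
  - apply HL; auto.
  - apply HR; auto.
  - lra.
Qed.

Lemma major_function_parts_primitive a b h W phi phi' :
  a < b -> continuous_R W -> major_function a b h W ->
  (forall x, is_derive phi x (phi' x)) -> continuous_R phi' -> (forall x, a <= x <= b -> 0 < phi x) ->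
  major_function a b (fun x => h x * phi x) (parts_primitive a W phi phi').
Proof.
  intros Hab HWc [_ HW] Hd Hc Hpos.
  destruct (continuous_R_bounded phi' a b ltac:(lra) Hc) as [C [HC HCb]].
  split; [apply continuous_on_cc_of_continuous_R, continuous_R_parts_primitive; auto |].
  intros x Hx; destruct (HW x Hx) as [Hl _].
  assert (Hres : Rbar_le (Finite (phi x * h x)) (lower_LD a b (parts_primitive a W phi phi') x)).
  { apply (lower_LD_transfer a b W); auto.
    - intros Hxb c Hc'.
      apply (liminf_pinfty_affine _ _ _ (phi x) c (Hpos x Hx)
               (laplace_parts_remainder_right_vanishes a b C W phi phi' HWc Hd Hc HC HCb x ltac:(lra))
               (laplace_right_parts_primitive a W phi phi' HWc Hd Hc x (b - x)) Hc').
    - intros Hax c Hc'.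
      apply (liminf_pinfty_affine _ _ _ (phi x) c (Hpos x Hx)
               (vanishes_at_pinfty_opp _ (laplace_parts_remainder_left_vanishes a b C W phi phi'
                  HWc Hd Hc HC HCb x ltac:(lra)))
               (laplace_left_parts_primitive a W phi phi' HWc Hd Hc x (x - a)) Hc'). }
  rewrite Rmult_comm in Hres; split; auto.
  intros E; rewrite E in Hres; exact Hres.
Qed.

Lemma minor_function_parts_primitive a b h V phi phi' :
  a < b -> continuous_R V -> minor_function a b h V ->
  (forall x, is_derive phi x (phi' x)) -> continuous_R phi' -> (forall x, a <= x <= b -> 0 < phi x) ->
  minor_function a b (fun x => h x * phi x) (parts_primitive a V phi phi').
Proof.
  intros Hab HVc [_ HV] Hd Hc Hpos.
  destruct (continuous_R_bounded phi' a b ltac:(lra) Hc) as [C [HC HCb]].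
  split; [apply continuous_on_cc_of_continuous_R, continuous_R_parts_primitive; auto |].
  intros x Hx; destruct (HV x Hx) as [Hu _].
  assert (Hres : Rbar_le (upper_LD a b (parts_primitive a V phi phi') x) (Finite (phi x * h x))).
  { apply (upper_LD_transfer a b V); auto.
    - intros Hxb c Hc'.
      apply (limsup_pinfty_affine _ _ _ (phi x) c (Hpos x Hx)
               (laplace_parts_remainder_right_vanishes a b C V phi phi' HVc Hd Hc HC HCb x
                  ltac:(lra))
               (laplace_right_parts_primitive a V phi phi' HVc Hd Hc x (b - x)) Hc').
    - intros Hax c Hc'.
      apply (limsup_pinfty_affine _ _ _ (phi x) c (Hpos x Hx)
               (vanishes_at_pinfty_opp _ (laplace_parts_remainder_left_vanishes a b C V phi
                  phi' HVc Hd Hc HC HCb x ltac:(lra)))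
               (laplace_left_parts_primitive a V phi phi' HVc Hd Hc x (x - a)) Hc'). }
  rewrite Rmult_comm in Hres; split; auto.
  intros E; rewrite E in Hres; exact Hres.
Qed.

Lemma is_laplace_integral_unique h a b I1 I2 :
  is_laplace_integral h a b I1 -> is_laplace_integral h a b I2 -> I1 = I2.
Proof.
  intros [H1 _] [H2 _]; apply is_lub_Rbar_unique in H1; apply is_lub_Rbar_unique in H2.
  rewrite H1 in H2; injection H2; auto.
Qed.

Lemma is_laplace_integral_squeeze h a b J : a < b ->
  (forall e, 0 < e -> exists W, major_function a b h W /\ W b - W a <= J + e) ->
  (forall e, 0 < e -> exists V, minor_function a b h V /\ J - e <= V b - V a) ->
  is_laplace_integral h a b J.
Proof.
  intros Hab HW HV.
  assert (Hcmp : forall W V, major_function a b h W -> minor_function a b h V ->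
                   V b - V a <= W b - W a)
    by (intros; eapply major_minor_increment_le; eauto; lra).
  split; split.
  - intros v [V [HVm ->]]; simpl; apply le_epsilon; intros e He.
    destruct (HW e He) as [W [HWm HWv]]; specialize (Hcmp W V HWm HVm); lra.
  - intros [B | |] HB; simpl; auto.
    + apply le_epsilon; intros e He; destruct (HV e He) as [V [HVm HVv]].
      specialize (HB (V b - V a) (ex_intro _ V (conj HVm eq_refl))); simpl in HB; lra.
    + destruct (HV 1 Rlt_0_1) as [V [HVm _]].
      exact (HB (V b - V a) (ex_intro _ V (conj HVm eq_refl))).
  - intros w [W [HWm ->]]; simpl; apply le_epsilon; intros e He.
    destruct (HV e He) as [V [HVm HVv]]; specialize (Hcmp W V HWm HVm); lra.
  - intros [B | |] HB; simpl; auto.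
    + apply le_epsilon; intros e He; destruct (HW e He) as [W [HWm HWv]].
      specialize (HB (W b - W a) (ex_intro _ W (conj HWm eq_refl))); simpl in HB; lra.
    + destruct (HW 1 Rlt_0_1) as [W [HWm _]].
      exact (HB (W b - W a) (ex_intro _ W (conj HWm eq_refl))).
Qed.

Lemma is_laplace_integral_approx h a b I : is_laplace_integral h a b I ->
  forall e, 0 < e -> exists W V, major_function a b h W /\ minor_function a b h V /\
    W b - W a <= I + e /\ I - e <= V b - V a.
Proof.
  intros [[_ Hlub] [_ Hglb]] e He.
  assert (HW : exists W, major_function a b h W /\ W b - W a <= I + e).
  { apply NNPP; intros Hn.
    assert (Rbar_le (Finite (I + e)) (Finite I)); [| simpl in *; lra].
    apply Hglb; intros w [W [HW ->]]; simpl.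
    destruct (Rle_lt_dec (I + e) (W b - W a)); auto.
    exfalso; apply Hn; exists W; split; auto; lra. }
  assert (HV : exists V, minor_function a b h V /\ I - e <= V b - V a).
  { apply NNPP; intros Hn.
    assert (Rbar_le (Finite I) (Finite (I - e))); [| simpl in *; lra].
    apply Hlub; intros v [V [HV ->]]; simpl.
    destruct (Rle_lt_dec (V b - V a) (I - e)); auto.
    exfalso; apply Hn; exists V; split; auto; lra. }
  destruct HW as [W HW], HV as [V HV]; exists W, V; tauto.
Qed.

Lemma continuous_R_of_uniform_approx (F : R -> R) :
  (forall e, 0 < e -> exists g, continuous_R g /\ forall x, Rabs (g x - F x) <= e) ->
  continuous_R F.
Proof.
  intros H x; apply filterlim_locally; intros eps.
  destruct (H (eps / 3)) as [g [Hg Hgx]]; [destruct eps; simpl; lra |].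
  destruct (proj1 (filterlim_locally g (g x)) (Hg x)
              (mkposreal (eps / 3) ltac:(destruct eps; simpl; lra))) as [d Hd].
  exists d; intros y Hy; specialize (Hd y Hy).
  change (Rabs (g y - g x) < eps / 3) in Hd; change (Rabs (F y - F x) < eps).
  pose proof (Hgx x) as Hx'; pose proof (Hgx y) as Hy'.
  apply Rabs_le_between in Hx'; apply Rabs_le_between in Hy'; apply Rabs_lt_between in Hd.
  apply Rabs_lt_between; lra.
Qed.

Section LaplacePrimitive.
Variables (a b : R) (h : R -> R) (I : R).
Hypotheses (Hab : a < b) (HI : is_laplace_integral h a b I).

Definition laplace_primitive (x : R) : R :=
  real (Glb_Rbar (fun w => exists W, major_function a b h W /\ w = W x - W a)).

Lemma laplace_primitive_between W V x :
  major_function a b h W -> minor_function a b h V -> a <= x <= b ->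
  V x - V a <= laplace_primitive x <= W x - W a.
Proof.
  intros HW HV Hx; unfold laplace_primitive.
  destruct (Glb_Rbar_correct (fun w => exists W, major_function a b h W /\ w = W x - W a))
    as [Hlb Hglb].
  assert (Hle : Rbar_le (Glb_Rbar (fun w => exists W, major_function a b h W /\ w = W x - W a))
                        (W x - W a)) by (apply Hlb; exists W; auto).
  assert (Hge : Rbar_le (V x - V a)
                        (Glb_Rbar (fun w => exists W, major_function a b h W /\ w = W x - W a))).
  { apply Hglb; intros w [W' [HW' ->]]; apply (major_minor_increment_le a b h); auto; lra. }
  destruct (Glb_Rbar _); simpl in *; try contradiction; lra.
Qed.

Lemma laplace_primitive_approx e : 0 < e ->
  exists W V, major_function a b h W /\ continuous_R W /\ W a = 0 /\
              minor_function a b h V /\ continuous_R V /\ V a = 0 /\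
              forall x, a <= x <= b ->
                Rabs (W x - laplace_primitive x) <= e /\ Rabs (V x - laplace_primitive x) <= e.
Proof.
  intros He.
  destruct (is_laplace_integral_approx h a b I HI (e / 2) ltac:(lra))
    as [W0 [V0 [HW0 [HV0 [HW0v HV0v]]]]].
  destruct (major_function_clamp_extension a b h W0 ltac:(lra) HW0) as [HW1 HW1c].
  destruct (minor_function_clamp_extension a b h V0 ltac:(lra) HV0) as [HV1 HV1c].
  assert (Hgap : forall x, a <= x <= b -> (W0 x - W0 a) - (V0 x - V0 a) <= e).
  { intros x Hx; pose proof (major_minor_increment_le a b h W0 V0 x b Hab HW0 HV0); lra. }
  exists (fun x => clamp_extension a b W0 x + - W0 a), (fun x => clamp_extension a b V0 x + - V0 a).
  split; [apply major_function_add_const, HW1 |].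
  split; [solve_continuous_R |].
  split; [rewrite clamp_extension_id by lra; ring |].
  split; [apply minor_function_add_const, HV1 |].
  split; [solve_continuous_R |].
  split; [rewrite clamp_extension_id by lra; ring |].
  intros x Hx; rewrite !clamp_extension_id by lra.
  pose proof (laplace_primitive_between W0 V0 x HW0 HV0 Hx); specialize (Hgap x Hx).
  split; apply Rabs_le_between; lra.
Qed.

Lemma laplace_primitive_upper_end : laplace_primitive b = I.
Proof.
  unfold laplace_primitive; destruct HI as [_ Hglb].
  rewrite (is_glb_Rbar_unique _ _ Hglb); reflexivity.
Qed.

Definition laplace_primitive_R : R -> R := clamp_extension a b laplace_primitive.

Lemma continuous_R_laplace_primitive_R : continuous_R laplace_primitive_R.
Proof.
  apply continuous_R_of_uniform_approx; intros e He.
  destruct (laplace_primitive_approx e He) as [W [V [HW [HWc [HWa [_ [_ [_ H]]]]]]]].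
  exists (clamp_extension a b W); split.
  - apply continuous_R_clamp_extension; [lra | apply continuous_on_cc_of_continuous_R, HWc].
  - intros x; apply H, clamp_in; lra.
Qed.

Lemma parts_primitive_increment_close (phi phi' : R -> R) C W e :
  (forall x, is_derive phi x (phi' x)) -> continuous_R phi' ->
  (forall t, a <= t <= b -> Rabs (phi' t) <= C) ->
  continuous_R W -> W a = 0 -> (forall x, a <= x <= b -> Rabs (W x - laplace_primitive x) <= e) ->
  Rabs ((parts_primitive a W phi phi' b - parts_primitive a W phi phi' a)
        - (I * phi b - RInt (fun t => laplace_primitive_R t * phi' t) a b))
    <= e * (Rabs (phi b) + (b - a) * C).
Proof.
  intros Hd Hc HC HWc HWa HWe.
  assert (HPc := continuous_R_laplace_primitive_R).
  assert (Hz : RInt (fun t => W t * phi' t) a a = 0) by apply (RInt_point (V := R_CompleteNormedModule)).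
  unfold parts_primitive; rewrite Hz, HWa.
  rewrite <- laplace_primitive_upper_end.
  replace (W b * phi b - RInt (fun t => W t * phi' t) a b - (0 * phi a - 0)
           - (laplace_primitive b * phi b - RInt (fun t => laplace_primitive_R t * phi' t) a b))
    with ((W b - laplace_primitive b) * phi b
          - (RInt (fun t => W t * phi' t) a b - RInt (fun t => laplace_primitive_R t * phi' t) a b))
    by ring.
  rewrite <- (RInt_minus (fun t => W t * phi' t) (fun t => laplace_primitive_R t * phi' t))
    by (apply ex_RInt_continuous_R; solve_continuous_R).
  change (minus ?u ?v) with (u - v).
  assert (H1 : Rabs (W b - laplace_primitive b) * Rabs (phi b) <= e * Rabs (phi b))
    by (apply Rmult_le_compat_r; [apply Rabs_pos | apply HWe; lra]).
  assert (H2 : Rabs (RInt (fun t => W t * phi' t - laplace_primitive_R t * phi' t) a b)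
               <= (b - a) * (e * C)).
  { apply abs_RInt_le_const; [lra | apply ex_RInt_continuous_R; solve_continuous_R |].
    intros t Ht; replace (W t * phi' t - laplace_primitive_R t * phi' t)
      with ((W t - laplace_primitive_R t) * phi' t) by ring.
    rewrite Rabs_mult; apply Rmult_le_compat; try apply Rabs_pos; [| apply HC; lra].
    unfold laplace_primitive_R; rewrite clamp_extension_id by lra; apply HWe; lra. }
  eapply Rle_trans; [apply Rabs_triang |]; rewrite Rabs_Ropp, Rabs_mult; lra.
Qed.

Lemma is_laplace_integral_mul_laplace_primitive (phi phi' : R -> R) :
  (forall x, is_derive phi x (phi' x)) -> continuous_R phi' -> (forall x, a <= x <= b -> 0 < phi x) ->
  is_laplace_integral (fun x => h x * phi x) a b
    (I * phi b - RInt (fun t => laplace_primitive_R t * phi' t) a b).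
Proof.
  intros Hd Hc Hpos.
  destruct (continuous_R_bounded phi' a b ltac:(lra) Hc) as [C [HC HCb]].
  set (K := Rabs (phi b) + (b - a) * C).
  assert (HK : 0 <= K) by (unfold K; pose proof (Rabs_pos (phi b)); nra).
  assert (Heps : forall e, 0 < e -> 0 < e / (K + 1)) by (intros; apply Rdiv_lt_0_compat; lra).
  assert (Hscale : forall e, 0 < e -> e / (K + 1) * K <= e).
  { intros e He; apply Rmult_le_reg_r with (K + 1); [lra |].
    replace (e / (K + 1) * K * (K + 1)) with (e * K) by (field; lra); nra. }
  apply is_laplace_integral_squeeze; [lra | |]; intros e He;
    destruct (laplace_primitive_approx (e / (K + 1)) (Heps e He))
      as [W [V [HW [HWc [HWa [HV [HVc [HVa H]]]]]]]].
  - exists (parts_primitive a W phi phi'); split; [apply major_function_parts_primitive; auto |].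
    pose proof (parts_primitive_increment_close phi phi' C W (e / (K + 1)) Hd Hc HCb HWc HWa
                  (fun x Hx => proj1 (H x Hx))) as Hclose.
    fold K in Hclose; specialize (Hscale e He); apply Rabs_le_between in Hclose; lra.
  - exists (parts_primitive a V phi phi'); split; [apply minor_function_parts_primitive; auto |].
    pose proof (parts_primitive_increment_close phi phi' C V (e / (K + 1)) Hd Hc HCb HVc HVa
                  (fun x Hx => proj2 (H x Hx))) as Hclose.
    fold K in Hclose; specialize (Hscale e He); apply Rabs_le_between in Hclose; lra.
Qed.

End LaplacePrimitive.

Lemma is_laplace_integral_mul_smooth a b h I : a < b -> is_laplace_integral h a b I ->
  exists Phi : R -> R, continuous_R Phi /\
    forall phi phi' : R -> R, (forall x, is_derive phi x (phi' x)) -> continuous_R phi' ->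
      (forall x, a <= x <= b -> 0 < phi x) ->
      is_laplace_integral (fun x => h x * phi x) a b (I * phi b - RInt (fun t => Phi t * phi' t) a b).
Proof.
  intros Hab HI; exists (laplace_primitive_R a b h); split.
  - apply (continuous_R_laplace_primitive_R a b h I Hab HI).
  - intros; apply is_laplace_integral_mul_laplace_primitive; auto.
Qed.

(** * Kernels built from negative powers of [z - w(t)] *)

Lemma is_derive_R_eq (f : R -> R) (x l l' : R) : is_derive f x l -> l = l' -> is_derive f x l'.
Proof. intros H ->; exact H. Qed.
Lemma is_derive_R_plus {f g : R -> R} {x df dg : R} :
  is_derive f x df -> is_derive g x dg -> is_derive (fun t => f t + g t) x (df + dg).
Proof. intros; apply (is_derive_plus f g); auto. Qed.
Lemma is_derive_R_minus {f g : R -> R} {x df dg : R} :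
  is_derive f x df -> is_derive g x dg -> is_derive (fun t => f t - g t) x (df - dg).
Proof. intros; apply (is_derive_minus f g); auto. Qed.
Lemma is_derive_R_mult {f g : R -> R} {x df dg : R} :
  is_derive f x df -> is_derive g x dg -> is_derive (fun t => f t * g t) x (df * g x + f x * dg).
Proof. intros; apply (is_derive_mult f g); auto; intros; apply Rmult_comm. Qed.
Lemma is_derive_R_const (c x : R) : is_derive (fun _ => c) x 0.
Proof. apply (is_derive_const (K := R_AbsRing) (V := R_NormedModule)). Qed.
Lemma is_derive_R_id (x : R) : is_derive (fun t => t) x 1.
Proof. apply (is_derive_id (K := R_AbsRing)). Qed.
Lemma is_derive_R_shift (f : R -> R) (c x l : R) :
  is_derive f (x - c) l -> is_derive (fun z => f (z - c)) x l.
Proof.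
  intros H; eapply is_derive_R_eq; [apply (is_derive_comp f (fun z => z - c)); [exact H |] |].
  - apply (is_derive_R_minus (is_derive_R_id x) (is_derive_R_const c x)).
  - change (scal (1 - 0) l = l); unfold scal; simpl; unfold mult; simpl; ring.
Qed.

Definition sqnorm (X Y : R) : R := X * X + Y * Y.

(* [re_inv_pow n X Y + i im_inv_pow n X Y = (X + i Y)^(-n)]. *)
Fixpoint re_inv_pow (n : nat) (X Y : R) {struct n} : R :=
  match n with
  | O => 1
  | S m => (re_inv_pow m X Y * X + im_inv_pow m X Y * Y) / sqnorm X Y
  end
with im_inv_pow (n : nat) (X Y : R) {struct n} : R :=
  match n with
  | O => 0
  | S m => (im_inv_pow m X Y * X - re_inv_pow m X Y * Y) / sqnorm X Y
  end.

(* The holomorphy of [z^(-n)]: [d/dX z^(-n) = -n z^(-n-1)] and [d/dY z^(-n) = -i n z^(-n-1)]. *)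
Lemma is_derive_inv_pow n X Y : sqnorm X Y <> 0 ->
  is_derive (fun X => re_inv_pow n X Y) X (- INR n * re_inv_pow (S n) X Y) /\
  is_derive (fun X => im_inv_pow n X Y) X (- INR n * im_inv_pow (S n) X Y) /\
  is_derive (fun Y => re_inv_pow n X Y) Y (INR n * im_inv_pow (S n) X Y) /\
  is_derive (fun Y => im_inv_pow n X Y) Y (- INR n * re_inv_pow (S n) X Y).
Proof.
  intros Hn; induction n as [| n [IH1 [IH2 [IH3 IH4]]]].
  - simpl; split; [| split; [| split]]; (eapply is_derive_R_eq; [apply is_derive_R_const | ring]).
  - assert (HnX : is_derive (fun X => sqnorm X Y) X (2 * X)).
    { eapply is_derive_R_eq;
        [eapply is_derive_R_plus; [eapply is_derive_R_mult; apply is_derive_R_id | apply is_derive_R_const] |].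
      cbv beta; ring. }
    assert (HnY : is_derive (fun Y => sqnorm X Y) Y (2 * Y)).
    { eapply is_derive_R_eq;
        [eapply is_derive_R_plus; [apply is_derive_R_const | eapply is_derive_R_mult; apply is_derive_R_id] |].
      cbv beta; ring. }
    rewrite S_INR; cbn [re_inv_pow im_inv_pow] in *.
    set (c := re_inv_pow n X Y) in *; set (d := im_inv_pow n X Y) in *.
    assert (HX := is_derive_R_id X); assert (HY := is_derive_R_id Y).
    assert (HcX := is_derive_R_const Y X); assert (HcY := is_derive_R_const X Y).
    split; [| split; [| split]];
      (eapply is_derive_R_eq; [apply is_derive_div; [| eassumption | exact Hn] |]);
    [> exact (is_derive_R_plus (is_derive_R_mult IH1 HX) (is_derive_R_mult IH2 HcX))
     | | exact (is_derive_R_minus (is_derive_R_mult IH2 HX) (is_derive_R_mult IH1 HcX))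
     | | exact (is_derive_R_plus (is_derive_R_mult IH3 HcY) (is_derive_R_mult IH4 HY))
     | | exact (is_derive_R_minus (is_derive_R_mult IH4 HcY) (is_derive_R_mult IH3 HY))
     | ].
    all: cbv beta; fold c d; unfold sqnorm in *; field; exact Hn.
Qed.

Lemma continuous_inv_pow {U : UniformSpace} n (fX fY : U -> R) p :
  continuous fX p -> continuous fY p -> sqnorm (fX p) (fY p) <> 0 ->
  continuous (fun q => re_inv_pow n (fX q) (fY q)) p /\
  continuous (fun q => im_inv_pow n (fX q) (fY q)) p.
Proof.
  intros HX HY Hn.
  assert (Hinv : continuous (fun q => / sqnorm (fX q) (fY q)) p).
  { apply (continuous_comp (fun q => sqnorm (fX q) (fY q)) Rinv); [| apply continuous_Rinv, Hn].
    apply (continuous_plus (fun q => fX q * fX q) (fun q => fY q * fY q));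
      [apply (continuous_mult fX fX) | apply (continuous_mult fY fY)]; auto. }
  induction n as [| n [IHre IHim]]; simpl; [split; apply continuous_const |].
  unfold Rdiv; split.
  - apply (continuous_mult (fun q => re_inv_pow n (fX q) (fY q) * fX q + im_inv_pow n (fX q) (fY q) * fY q)
             (fun q => / sqnorm (fX q) (fY q))); auto.
    apply (continuous_plus (fun q => re_inv_pow n (fX q) (fY q) * fX q)
             (fun q => im_inv_pow n (fX q) (fY q) * fY q));
      [apply (continuous_mult (fun q => re_inv_pow n (fX q) (fY q)) fX)
      | apply (continuous_mult (fun q => im_inv_pow n (fX q) (fY q)) fY)]; auto.
  - apply (continuous_mult (fun q => im_inv_pow n (fX q) (fY q) * fX q - re_inv_pow n (fX q) (fY q) * fY q)
             (fun q => / sqnorm (fX q) (fY q))); auto.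
    apply (continuous_minus (fun q => im_inv_pow n (fX q) (fY q) * fX q)
             (fun q => re_inv_pow n (fX q) (fY q) * fY q));
      [apply (continuous_mult (fun q => im_inv_pow n (fX q) (fY q)) fX)
      | apply (continuous_mult (fun q => re_inv_pow n (fX q) (fY q)) fY)]; auto.
Qed.

Definition jointly_continuous (K : R -> R -> R -> R) (x y t : R) : Prop :=
  continuous (fun p : (R * R) * R => K (fst (fst p)) (snd (fst p)) (snd p)) ((x, y), t).

(* [inv_pow_kernel n A1 A2 Wc Ws x y t = Re ((A1 t + i A2 t) / (z - w t)^n)]
   with [z = x + i y] and [w t = Wc t + i Ws t]. *)
Definition inv_pow_kernel (n : nat) (A1 A2 Wc Ws : R -> R) (x y t : R) : R :=
  A1 t * re_inv_pow n (x - Wc t) (y - Ws t) - A2 t * im_inv_pow n (x - Wc t) (y - Ws t).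

Lemma jointly_continuous_inv_pow_kernel n A1 A2 Wc Ws x y t :
  continuous_R A1 -> continuous_R A2 -> continuous_R Wc -> continuous_R Ws ->
  sqnorm (x - Wc t) (y - Ws t) <> 0 -> jointly_continuous (inv_pow_kernel n A1 A2 Wc Ws) x y t.
Proof.
  intros H1 H2 H3 H4 Hn; unfold jointly_continuous, inv_pow_kernel.
  assert (Hx : continuous (fun p : (R * R) * R => fst (fst p)) ((x, y), t))
    by (apply (continuous_comp (fun p : (R * R) * R => fst p) fst); apply continuous_fst).
  assert (Hy : continuous (fun p : (R * R) * R => snd (fst p)) ((x, y), t))
    by (apply (continuous_comp (fun p : (R * R) * R => fst p) snd);
        [apply continuous_fst | apply continuous_snd]).
  assert (Ht : forall f, continuous_R f -> continuous (fun p : (R * R) * R => f (snd p)) ((x, y), t))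
    by (intros f Hf; apply (continuous_comp (fun p : (R * R) * R => snd p) f);
        [apply continuous_snd | apply Hf]).
  set (fX := fun p : (R * R) * R => fst (fst p) - Wc (snd p)).
  set (fY := fun p : (R * R) * R => snd (fst p) - Ws (snd p)).
  assert (HfX : continuous fX ((x, y), t))
    by (apply (continuous_minus (fun p : (R * R) * R => fst (fst p)) (fun p => Wc (snd p))); auto).
  assert (HfY : continuous fY ((x, y), t))
    by (apply (continuous_minus (fun p : (R * R) * R => snd (fst p)) (fun p => Ws (snd p))); auto).
  destruct (continuous_inv_pow n fX fY ((x, y), t) HfX HfY Hn) as [Hre Him].
  apply (continuous_minus (fun p : (R * R) * R => A1 (snd p) * re_inv_pow n (fX p) (fY p))
                          (fun p : (R * R) * R => A2 (snd p) * im_inv_pow n (fX p) (fY p)));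
    [apply (continuous_mult (fun p : (R * R) * R => A1 (snd p)) (fun p => re_inv_pow n (fX p) (fY p)))
    | apply (continuous_mult (fun p : (R * R) * R => A2 (snd p)) (fun p => im_inv_pow n (fX p) (fY p)))];
    auto.
Qed.

Lemma is_derive_inv_pow_kernel_x n A1 A2 Wc Ws x y t : sqnorm (x - Wc t) (y - Ws t) <> 0 ->
  is_derive (fun x' => inv_pow_kernel n A1 A2 Wc Ws x' y t) x
    (inv_pow_kernel (S n) (fun t => - INR n * A1 t) (fun t => - INR n * A2 t) Wc Ws x y t).
Proof.
  intros Hn; destruct (is_derive_inv_pow n (x - Wc t) (y - Ws t) Hn) as [Dre [Dim _]].
  unfold inv_pow_kernel; eapply is_derive_R_eq.
  - eapply is_derive_R_minus; (eapply is_derive_R_mult; [apply is_derive_R_const |]).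
    + apply (is_derive_R_shift (fun X => re_inv_pow n X (y - Ws t))), Dre.
    + apply (is_derive_R_shift (fun X => im_inv_pow n X (y - Ws t))), Dim.
  - cbv beta; ring.
Qed.

Lemma is_derive_inv_pow_kernel_y n A1 A2 Wc Ws x y t : sqnorm (x - Wc t) (y - Ws t) <> 0 ->
  is_derive (fun y' => inv_pow_kernel n A1 A2 Wc Ws x y' t) y
    (inv_pow_kernel (S n) (fun t => INR n * A2 t) (fun t => - INR n * A1 t) Wc Ws x y t).
Proof.
  intros Hn; destruct (is_derive_inv_pow n (x - Wc t) (y - Ws t) Hn) as [_ [_ [Dre Dim]]].
  unfold inv_pow_kernel; eapply is_derive_R_eq.
  - eapply is_derive_R_minus; (eapply is_derive_R_mult; [apply is_derive_R_const |]).
    + apply (is_derive_R_shift (fun Y => re_inv_pow n (x - Wc t) Y)), Dre.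
    + apply (is_derive_R_shift (fun Y => im_inv_pow n (x - Wc t) Y)), Dim.
  - cbv beta; ring.
Qed.

Definition harmonic_kernel_on (D : R -> R -> Prop) (K : R -> R -> R -> R) : Prop :=
  exists Kx Ky Kxx Kxy Kyx Kyy : R -> R -> R -> R, forall x y t, D x y ->
    is_derive (fun x' => K x' y t) x (Kx x y t) /\ is_derive (fun y' => K x y' t) y (Ky x y t) /\
    is_derive (fun x' => Kx x' y t) x (Kxx x y t) /\ is_derive (fun y' => Kx x y' t) y (Kxy x y t) /\
    is_derive (fun x' => Ky x' y t) x (Kyx x y t) /\ is_derive (fun y' => Ky x y' t) y (Kyy x y t) /\
    jointly_continuous K x y t /\ jointly_continuous Kx x y t /\ jointly_continuous Ky x y t /\
    jointly_continuous Kxx x y t /\ jointly_continuous Kxy x y t /\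
    jointly_continuous Kyx x y t /\ jointly_continuous Kyy x y t /\
    Kxx x y t + Kyy x y t = 0.

Ltac split_conjunctions := repeat match goal with |- _ /\ _ => split end.

Lemma harmonic_kernel_on_const D c : harmonic_kernel_on D (fun _ _ _ => c).
Proof.
  exists (fun _ _ _ => 0), (fun _ _ _ => 0), (fun _ _ _ => 0), (fun _ _ _ => 0),
         (fun _ _ _ => 0), (fun _ _ _ => 0).
  intros x y t _; split_conjunctions;
    solve [apply is_derive_R_const | apply continuous_const | ring].
Qed.

Lemma harmonic_kernel_on_plus D K1 K2 :
  harmonic_kernel_on D K1 -> harmonic_kernel_on D K2 ->
  harmonic_kernel_on D (fun x y t => K1 x y t + K2 x y t).
Proof.
  intros [K1x [K1y [K1xx [K1xy [K1yx [K1yy H1]]]]]] [K2x [K2y [K2xx [K2xy [K2yx [K2yy H2]]]]]].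
  exists (fun x y t => K1x x y t + K2x x y t), (fun x y t => K1y x y t + K2y x y t),
         (fun x y t => K1xx x y t + K2xx x y t), (fun x y t => K1xy x y t + K2xy x y t),
         (fun x y t => K1yx x y t + K2yx x y t), (fun x y t => K1yy x y t + K2yy x y t).
  intros x y t Hxy.
  destruct (H1 x y t Hxy) as [a1 [a2 [a3 [a4 [a5 [a6 [b1 [b2 [b3 [b4 [b5 [b6 [b7 L1]]]]]]]]]]]]].
  destruct (H2 x y t Hxy) as [c1 [c2 [c3 [c4 [c5 [c6 [d1 [d2 [d3 [d4 [d5 [d6 [d7 L2]]]]]]]]]]]]].
  assert (Hc : forall F G : R -> R -> R -> R, jointly_continuous F x y t -> jointly_continuous G x y t ->
                 jointly_continuous (fun x y t => F x y t + G x y t) x y t)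
    by (intros F G HF HG; apply (continuous_plus
          (fun p : (R * R) * R => F (fst (fst p)) (snd (fst p)) (snd p))
          (fun p : (R * R) * R => G (fst (fst p)) (snd (fst p)) (snd p))); auto).
  split_conjunctions.
  1-6: eapply is_derive_R_plus; assumption.
  1-7: apply Hc; assumption.
  cbv beta; lra.
Qed.

Lemma harmonic_kernel_on_inv_pow_kernel D n A1 A2 Wc Ws :
  continuous_R A1 -> continuous_R A2 -> continuous_R Wc -> continuous_R Ws ->
  (forall x y t, D x y -> sqnorm (x - Wc t) (y - Ws t) <> 0) ->
  harmonic_kernel_on D (inv_pow_kernel n A1 A2 Wc Ws).
Proof.
  intros H1 H2 H3 H4 Hn.
  set (k := INR n); set (k' := INR (S n)).
  exists (inv_pow_kernel (S n) (fun t => - k * A1 t) (fun t => - k * A2 t) Wc Ws),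
         (inv_pow_kernel (S n) (fun t => k * A2 t) (fun t => - k * A1 t) Wc Ws),
         (inv_pow_kernel (S (S n)) (fun t => - k' * (- k * A1 t)) (fun t => - k' * (- k * A2 t)) Wc Ws),
         (inv_pow_kernel (S (S n)) (fun t => k' * (- k * A2 t)) (fun t => - k' * (- k * A1 t)) Wc Ws),
         (inv_pow_kernel (S (S n)) (fun t => - k' * (k * A2 t)) (fun t => - k' * (- k * A1 t)) Wc Ws),
         (inv_pow_kernel (S (S n)) (fun t => k' * (- k * A1 t)) (fun t => - k' * (k * A2 t)) Wc Ws).
  intros x y t Hxy; specialize (Hn x y t Hxy).
  split_conjunctions.
  1, 3, 5: apply is_derive_inv_pow_kernel_x; assumption.
  1, 2, 3: apply is_derive_inv_pow_kernel_y; assumption.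
  1-7: apply jointly_continuous_inv_pow_kernel; [solve_continuous_R .. | exact Hn].
  unfold inv_pow_kernel; ring.
Qed.

(** * Harmonic functions defined by parametric integrals *)

Lemma jointly_continuous_eps K x y t : jointly_continuous K x y t ->
  forall eps, 0 < eps -> exists d, 0 < d /\ forall x' y' t',
    Rabs (x' - x) < d -> Rabs (y' - y) < d -> Rabs (t' - t) < d -> Rabs (K x' y' t' - K x y t) < eps.
Proof.
  intros H eps He.
  destruct (proj1 (filterlim_locally _ _) H (mkposreal eps He)) as [d Hd].
  exists d; split; [apply cond_pos |]; intros x' y' t' H1 H2 H3.
  exact (Hd ((x', y'), t') (conj (conj H1 H2) H3)).
Qed.

Lemma jointly_continuous_continuous_t K x y t : jointly_continuous K x y t -> continuous (K x y) t.
Proof.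
  intros H; apply filterlim_locally; intros eps.
  destruct (jointly_continuous_eps K x y t H eps (cond_pos eps)) as [d [Hd Hd']].
  exists (mkposreal d Hd); intros s Hs; apply Hd'; auto; rewrite Rminus_eq_0, Rabs_R0; exact Hd.
Qed.

Lemma jointly_continuous_continuity_2d_x K x y t :
  jointly_continuous K x y t -> continuity_2d_pt (fun u v => K u y v) x t.
Proof.
  intros H eps; destruct (jointly_continuous_eps K x y t H eps (cond_pos eps)) as [d [Hd Hd']].
  exists (mkposreal d Hd); intros u v Hu Hv; apply Hd'; auto; rewrite Rminus_eq_0, Rabs_R0; exact Hd.
Qed.

Lemma jointly_continuous_continuity_2d_y K x y t :
  jointly_continuous K x y t -> continuity_2d_pt (fun u v => K x u v) y t.
Proof.
  intros H eps; destruct (jointly_continuous_eps K x y t H eps (cond_pos eps)) as [d [Hd Hd']].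
  exists (mkposreal d Hd); intros u v Hu Hv; apply Hd'; auto; rewrite Rminus_eq_0, Rabs_R0; exact Hd.
Qed.

(* Uniformity in [t] comes from the compactness of [[a, b]]. *)
Lemma jointly_continuous_uniform_in_t K a b x0 y0 :
  (forall t, jointly_continuous K x0 y0 t) ->
  forall eps, 0 < eps -> exists d, 0 < d /\ forall x y, Rabs (x - x0) < d -> Rabs (y - y0) < d ->
    forall t, a <= t <= b -> Rabs (K x y t - K x0 y0 t) <= 2 * eps.
Proof.
  intros HK eps Heps.
  assert (Hex : forall t, exists d : posreal, forall x' y' t', Rabs (x' - x0) < d -> Rabs (y' - y0) < d ->
             Rabs (t' - t) < d -> Rabs (K x' y' t' - K x0 y0 t) < eps).
  { intros t; destruct (jointly_continuous_eps K x0 y0 t (HK t) eps Heps) as [d [Hd Hd']].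
    exists (mkposreal d Hd); exact Hd'. }
  set (dl := fun t => proj1_sig (constructive_indefinite_description _ (Hex t))).
  assert (Hdl : forall t x' y' t', Rabs (x' - x0) < dl t -> Rabs (y' - y0) < dl t ->
             Rabs (t' - t) < dl t -> Rabs (K x' y' t' - K x0 y0 t) < eps).
  { intros t; unfold dl; destruct (constructive_indefinite_description _ (Hex t)) as [d Hd]; exact Hd. }
  destruct (compactness_value_1d a b dl) as [d Hd].
  exists d; split; [apply cond_pos |]; intros x y Hx Hy t Ht.
  apply NNPP; intros Hn; apply (Hd t Ht); intros [t' [Ht' [H1 H2]]]; apply Hn.
  assert (A1 : Rabs (K x y t - K x0 y0 t') < eps) by (apply Hdl; lra).
  assert (A2 : Rabs (K x0 y0 t - K x0 y0 t') < eps)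
    by (apply Hdl; try rewrite Rminus_eq_0, Rabs_R0; try apply cond_pos; lra).
  apply Rabs_lt_between in A1; apply Rabs_lt_between in A2; apply Rabs_le_between; lra.
Qed.

Lemma continuous_RInt_param K a b x0 y0 e : a <= b -> 0 < e ->
  (forall x y t, Rabs (x - x0) < e -> Rabs (y - y0) < e -> jointly_continuous K x y t) ->
  continuous (fun p : R * R => RInt (K (fst p) (snd p)) a b) (x0, y0).
Proof.
  intros Hab He HK; apply filterlim_locally; intros eps.
  assert (H0 : Rabs (x0 - x0) < e) by (rewrite Rminus_eq_0, Rabs_R0; lra).
  set (e' := eps / (4 * (b - a + 1))).
  assert (He' : 0 < e') by (unfold e'; destruct eps; simpl; apply Rdiv_lt_0_compat; lra).
  destruct (jointly_continuous_uniform_in_t K a b x0 y0 (fun t => HK x0 y0 t H0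
              ltac:(rewrite Rminus_eq_0, Rabs_R0; lra)) e' He') as [d [Hd Hunif]].
  assert (Hr : 0 < Rmin d e) by (apply Rmin_glb_lt; lra).
  exists (mkposreal _ Hr); intros [x y] [Hx Hy].
  change (Rabs (x - x0) < Rmin d e) in Hx; change (Rabs (y - y0) < Rmin d e) in Hy.
  change (Rabs (RInt (K x y) a b - RInt (K x0 y0) a b) < eps).
  pose proof (Rmin_l d e); pose proof (Rmin_r d e).
  assert (Hint : forall x y, Rabs (x - x0) < e -> Rabs (y - y0) < e -> ex_RInt (K x y) a b).
  { intros x' y' Hx' Hy'; apply (ex_RInt_continuous (V := R_CompleteNormedModule)).
    intros t _; apply jointly_continuous_continuous_t, HK; auto. }
  assert (Hxy : ex_RInt (K x y) a b) by (apply Hint; lra).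
  assert (Hxy0 : ex_RInt (K x0 y0) a b) by (apply Hint; rewrite ?Rminus_eq_0, ?Rabs_R0; lra).
  replace (RInt (K x y) a b - RInt (K x0 y0) a b) with (RInt (fun t => K x y t - K x0 y0 t) a b)
    by (apply (RInt_minus (K x y) (K x0 y0)); assumption).
  eapply Rle_lt_trans.
  - apply abs_RInt_le_const; [exact Hab | apply (ex_RInt_minus (K x y) (K x0 y0)); assumption |].
    intros t Ht; apply (Hunif x y); [lra | lra | exact Ht].
  - assert ((b - a) * (2 * e') = eps * ((b - a) / (2 * (b - a + 1)))) as -> by (unfold e'; field; lra).
    assert ((b - a) / (2 * (b - a + 1)) < 1).
    { apply Rmult_lt_reg_r with (2 * (b - a + 1)); [lra |].
      unfold Rdiv; rewrite Rmult_assoc, Rinv_l by lra; lra. }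
    assert (0 <= (b - a) / (2 * (b - a + 1)))
      by (apply Rmult_le_pos; [lra | apply Rlt_le, Rinv_0_lt_compat; lra]).
    destruct eps as [eps Heps]; simpl; nra.
Qed.

Lemma is_derive_RInt_param_R (f f' : R -> R -> R) a b x0 e : 0 < e ->
  (forall u t, Rabs (u - x0) < e -> is_derive (fun z => f z t) u (f' u t)) ->
  (forall u t, Rabs (u - x0) < e -> continuous (f u) t) ->
  (forall t, continuity_2d_pt f' x0 t) ->
  is_derive (fun x => RInt (f x) a b) x0 (RInt (f' x0) a b).
Proof.
  intros He Hd Hc H2.
  assert (Hloc : forall P : R -> Prop, (forall u, Rabs (u - x0) < e -> P u) -> locally x0 P)
    by (intros P HP; exists (mkposreal e He); intros u Hu; apply HP, Hu).
  assert (Hx0 : Rabs (x0 - x0) < e) by (rewrite Rminus_eq_0, Rabs_R0; lra).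
  replace (RInt (f' x0) a b) with (RInt (fun t => Derive (fun u => f u t) x0) a b)
    by (apply RInt_ext; intros t _; apply is_derive_unique, Hd, Hx0).
  apply (is_derive_RInt_param f a b x0).
  - apply Hloc; intros u Hu t _; exists (f' u t); apply Hd, Hu.
  - intros t _; apply (continuity_2d_pt_ext_loc f'); [| apply H2].
    exists (mkposreal e He); intros u v Hu Hv; symmetry; apply is_derive_unique, Hd, Hu.
  - apply Hloc; intros u Hu; apply (ex_RInt_continuous (V := R_CompleteNormedModule)).
    intros t _; apply Hc, Hu.
Qed.

Definition open_in_plane (D : R -> R -> Prop) : Prop :=
  forall x y, D x y -> exists e, 0 < e /\
    forall x' y', Rabs (x' - x) < e -> Rabs (y' - y) < e -> D x' y'.

Section ParametricIntegral.
Variables (D : R -> R -> Prop) (a b : R).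
Hypotheses (Hab : a <= b) (HD : open_in_plane D).

Lemma open_in_plane_locally x y : D x y ->
  locally x (fun u => D u y) /\ locally y (fun v => D x v) /\ locally (x, y) (fun p => D (fst p) (snd p)).
Proof.
  intros Hxy; destruct (HD x y Hxy) as [e [He HDe]].
  assert (H0 : forall z, Rabs (z - z) < e) by (intros; rewrite Rminus_eq_0, Rabs_R0; exact He).
  split; [| split]; exists (mkposreal e He).
  - intros u Hu; apply HDe; [apply Hu | apply H0].
  - intros v Hv; apply HDe; [apply H0 | apply Hv].
  - intros [u v] [Hu Hv]; apply HDe; [apply Hu | apply Hv].
Qed.

Lemma is_derive_x_of_RInt_repr (F : R -> R -> R) (K K' : R -> R -> R -> R) :
  (forall x y, D x y -> F x y = RInt (K x y) a b) ->
  (forall x y t, D x y -> is_derive (fun x' => K x' y t) x (K' x y t)) ->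
  (forall x y t, D x y -> jointly_continuous K x y t) ->
  (forall x y t, D x y -> jointly_continuous K' x y t) ->
  forall x y, D x y -> is_derive (fun u => F u y) x (RInt (K' x y) a b).
Proof.
  intros HF Hd HK HK' x y Hxy; destruct (HD x y Hxy) as [e [He HDe]].
  assert (Hin : forall u, Rabs (u - x) < e -> D u y)
    by (intros u Hu; apply HDe; [exact Hu | rewrite Rminus_eq_0, Rabs_R0; exact He]).
  apply (is_derive_ext_loc (fun u => RInt (K u y) a b)).
  - apply (filter_imp (fun u => D u y)); [intros u Hu; symmetry; apply HF, Hu |].
    apply (open_in_plane_locally x y Hxy).
  - apply (is_derive_RInt_param_R (fun u t => K u y t) (fun u t => K' u y t) a b x e He).
    + intros u t Hu; apply Hd, Hin, Hu.
    + intros u t Hu; apply jointly_continuous_continuous_t, HK, Hin, Hu.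
    + intros t; apply jointly_continuous_continuity_2d_x, HK', Hxy.
Qed.

Lemma is_derive_y_of_RInt_repr (F : R -> R -> R) (K K' : R -> R -> R -> R) :
  (forall x y, D x y -> F x y = RInt (K x y) a b) ->
  (forall x y t, D x y -> is_derive (fun y' => K x y' t) y (K' x y t)) ->
  (forall x y t, D x y -> jointly_continuous K x y t) ->
  (forall x y t, D x y -> jointly_continuous K' x y t) ->
  forall x y, D x y -> is_derive (fun v => F x v) y (RInt (K' x y) a b).
Proof.
  intros HF Hd HK HK' x y Hxy; destruct (HD x y Hxy) as [e [He HDe]].
  assert (Hin : forall v, Rabs (v - y) < e -> D x v)
    by (intros v Hv; apply HDe; [rewrite Rminus_eq_0, Rabs_R0; exact He | exact Hv]).
  apply (is_derive_ext_loc (fun v => RInt (K x v) a b)).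
  - apply (filter_imp (fun v => D x v)); [intros v Hv; symmetry; apply HF, Hv |].
    apply (open_in_plane_locally x y Hxy).
  - apply (is_derive_RInt_param_R (fun v t => K x v t) (fun v t => K' x v t) a b y e He).
    + intros v t Hv; apply Hd, Hin, Hv.
    + intros v t Hv; apply jointly_continuous_continuous_t, HK, Hin, Hv.
    + intros t; apply jointly_continuous_continuity_2d_y, HK', Hxy.
Qed.

Lemma continuous_of_RInt_repr (F : R -> R -> R) (K : R -> R -> R -> R) :
  (forall x y, D x y -> F x y = RInt (K x y) a b) ->
  (forall x y t, D x y -> jointly_continuous K x y t) ->
  forall x y, D x y -> continuous (fun p : R * R => F (fst p) (snd p)) (x, y).
Proof.
  intros HF HK x y Hxy; destruct (HD x y Hxy) as [e [He HDe]].
  apply (continuous_ext_loc _ (fun p : R * R => RInt (K (fst p) (snd p)) a b)).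
  - apply (filter_imp (fun p : R * R => D (fst p) (snd p)));
      [intros p Hp; symmetry; apply HF, Hp | apply (open_in_plane_locally x y Hxy)].
  - apply (continuous_RInt_param K a b x y e Hab He); intros x' y' t Hx' Hy'; apply HK, HDe; auto.
Qed.

Ltac harmonic_kernel_fact HK :=
  let x := fresh in let y := fresh in let t := fresh in let Hxy := fresh in
  intros x y t Hxy; destruct (HK x y t Hxy) as (? & ? & ? & ? & ? & ? & ? & ? & ? & ? & ? & ? & ? & ?);
  assumption.

Lemma harmonic_on_RInt K : harmonic_kernel_on D K -> harmonic_on D (fun x y => RInt (K x y) a b).
Proof.
  intros [Kx [Ky [Kxx [Kxy [Kyx [Kyy HK]]]]]].
  set (U := fun x y => RInt (K x y) a b).
  assert (HUx : forall x y, D x y -> is_derive (fun u => U u y) x (RInt (Kx x y) a b))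
    by (apply (is_derive_x_of_RInt_repr U K); [reflexivity | harmonic_kernel_fact HK ..]).
  assert (HUy : forall x y, D x y -> is_derive (fun v => U x v) y (RInt (Ky x y) a b))
    by (apply (is_derive_y_of_RInt_repr U K); [reflexivity | harmonic_kernel_fact HK ..]).
  assert (Hdx : forall x y, D x y -> dx U x y = RInt (Kx x y) a b)
    by (intros x y Hxy; apply is_derive_unique, HUx, Hxy).
  assert (Hdy : forall x y, D x y -> dy U x y = RInt (Ky x y) a b)
    by (intros x y Hxy; apply is_derive_unique, HUy, Hxy).
  assert (HUxx : forall x y, D x y -> is_derive (fun u => dx U u y) x (RInt (Kxx x y) a b))
    by (apply (is_derive_x_of_RInt_repr (dx U) Kx); [exact Hdx | harmonic_kernel_fact HK ..]).
  assert (HUxy : forall x y, D x y -> is_derive (fun v => dx U x v) y (RInt (Kxy x y) a b))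
    by (apply (is_derive_y_of_RInt_repr (dx U) Kx); [exact Hdx | harmonic_kernel_fact HK ..]).
  assert (HUyx : forall x y, D x y -> is_derive (fun u => dy U u y) x (RInt (Kyx x y) a b))
    by (apply (is_derive_x_of_RInt_repr (dy U) Ky); [exact Hdy | harmonic_kernel_fact HK ..]).
  assert (HUyy : forall x y, D x y -> is_derive (fun v => dy U x v) y (RInt (Kyy x y) a b))
    by (apply (is_derive_y_of_RInt_repr (dy U) Ky); [exact Hdy | harmonic_kernel_fact HK ..]).
  intros x y Hxy; split_conjunctions.
  - eexists; apply HUx, Hxy.
  - eexists; apply HUy, Hxy.
  - eexists; apply HUxx, Hxy.
  - eexists; apply HUxy, Hxy.
  - eexists; apply HUyx, Hxy.
  - eexists; apply HUyy, Hxy.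
  - apply (continuous_of_RInt_repr _ Kxx); [intros u v Huv; apply is_derive_unique, HUxx, Huv
                                            | harmonic_kernel_fact HK | exact Hxy].
  - apply (continuous_of_RInt_repr _ Kxy); [intros u v Huv; apply is_derive_unique, HUxy, Huv
                                            | harmonic_kernel_fact HK | exact Hxy].
  - apply (continuous_of_RInt_repr _ Kyx); [intros u v Huv; apply is_derive_unique, HUyx, Huv
                                            | harmonic_kernel_fact HK | exact Hxy].
  - apply (continuous_of_RInt_repr _ Kyy); [intros u v Huv; apply is_derive_unique, HUyy, Huv
                                            | harmonic_kernel_fact HK | exact Hxy].
  - replace (dx (dx U) x y) with (RInt (Kxx x y) a b) by (symmetry; apply is_derive_unique, HUxx, Hxy).
    replace (dy (dy U) x y) with (RInt (Kyy x y) a b) by (symmetry; apply is_derive_unique, HUyy, Hxy).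
    assert (Hex : forall K', (forall t, jointly_continuous K' x y t) -> ex_RInt (K' x y) a b)
      by (intros K' HK'; apply (ex_RInt_continuous (V := R_CompleteNormedModule));
          intros; apply jointly_continuous_continuous_t, HK').
    rewrite <- (RInt_plus (Kxx x y) (Kyy x y))
      by (apply Hex; intros t;
          destruct (HK x y t Hxy) as (_ & _ & _ & _ & _ & _ & _ & _ & _ & ? & _ & _ & ? & _); assumption).
    rewrite (RInt_ext (fun t => plus (Kxx x y t) (Kyy x y t)) (fun _ => 0))
      by (intros t _; destruct (HK x y t Hxy) as (_ & _ & _ & _ & _ & _ & _ & _ & _ & _ & _ & _ & _ & Hlap);
          exact Hlap).
    rewrite RInt_const; apply Rmult_0_r.
Qed.

End ParametricIntegral.

(** * The Poisson kernel *)

(* [poisson_xy x y t = Re ((w + z) / (w - z))] for [z = x + i y] and [w = e^(i t)]. *)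
Definition poisson_xy (x y t : R) : R := -1 - 2 * inv_pow_kernel 1 cos sin cos sin x y t.

Definition poisson_xy_dt (x y t : R) : R :=
  inv_pow_kernel 1 (fun t => 2 * sin t) (fun t => -2 * cos t) cos sin x y t +
  inv_pow_kernel 2 (fun t => 4 * (cos t * sin t)) (fun t => -2 * (cos t * cos t - sin t * sin t))
    cos sin x y t.

Lemma unit_disc_polar r theta : 0 <= r < 1 -> unit_disc (r * cos theta) (r * sin theta).
Proof.
  intros Hr; unfold unit_disc; pose proof (sin2_cos2 theta) as E; unfold Rsqr in E.
  replace ((r * cos theta) ^ 2 + (r * sin theta) ^ 2)
    with (r ^ 2 * (sin theta * sin theta + cos theta * cos theta)) by ring.
  rewrite E; nra.
Qed.

Lemma open_in_plane_unit_disc : open_in_plane unit_disc.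
Proof.
  intros x y H; unfold unit_disc in *.
  set (e := (1 - (x ^ 2 + y ^ 2)) / 8).
  exists e; split; [unfold e; lra |]; intros x' y' Hx Hy.
  apply Rabs_lt_between in Hx; apply Rabs_lt_between in Hy.
  assert (e <= 1 / 8) by (unfold e; nra).
  assert (-1 <= x <= 1) by nra; assert (-1 <= y <= 1) by nra.
  replace x' with (x + (x' - x)) by ring; replace y' with (y + (y' - y)) by ring.
  set (u := x' - x) in *; set (v := y' - y) in *.
  assert (x * u <= e) by nra; assert (y * v <= e) by nra.
  assert (u * u <= e) by nra; assert (v * v <= e) by nra.
  unfold e in *; nra.
Qed.

Lemma sqnorm_sub_circle_neq_0 x y t : unit_disc x y -> sqnorm (x - cos t) (y - sin t) <> 0.
Proof.
  intros H E; unfold unit_disc, sqnorm in *; pose proof (sin2_cos2 t) as Et; unfold Rsqr in Et.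
  pose proof (Rle_0_sqr (x - cos t)); pose proof (Rle_0_sqr (y - sin t)); unfold Rsqr in *.
  assert (Hx : (x - cos t) * (x - cos t) = 0) by lra.
  assert (Hy : (y - sin t) * (y - sin t) = 0) by lra.
  apply Rmult_integral in Hx; apply Rmult_integral in Hy.
  assert (x = cos t) by (destruct Hx; lra); assert (y = sin t) by (destruct Hy; lra); subst; nra.
Qed.

Lemma is_derive_poisson_xy x y t : unit_disc x y ->
  is_derive (poisson_xy x y) t (poisson_xy_dt x y t).
Proof.
  intros Hxy; pose proof (sqnorm_sub_circle_neq_0 x y t Hxy) as Hn.
  unfold poisson_xy, poisson_xy_dt, inv_pow_kernel; simpl re_inv_pow; simpl im_inv_pow.
  unfold sqnorm in *; auto_derive; [repeat split; auto | field; auto].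
Qed.

Lemma continuous_R_poisson_xy_dt x y : unit_disc x y -> continuous_R (poisson_xy_dt x y).
Proof.
  intros Hxy t; unfold poisson_xy_dt.
  apply (continuous_plus
    (inv_pow_kernel 1 (fun t => 2 * sin t) (fun t => -2 * cos t) cos sin x y)
    (inv_pow_kernel 2 (fun t => 4 * (cos t * sin t)) (fun t => -2 * (cos t * cos t - sin t * sin t))
       cos sin x y));
    apply jointly_continuous_continuous_t, jointly_continuous_inv_pow_kernel;
    solve [solve_continuous_R | apply sqnorm_sub_circle_neq_0, Hxy].
Qed.

Lemma poisson_polar r theta t : 0 <= r < 1 ->
  poisson r (theta - t) = poisson_xy (r * cos theta) (r * sin theta) t.
Proof.
  intros Hr; set (x := r * cos theta); set (y := r * sin theta).
  pose proof (sqnorm_sub_circle_neq_0 x y t (unit_disc_polar r theta Hr)) as Hn.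
  pose proof (sin2_cos2 t) as Et; pose proof (sin2_cos2 theta) as Eth; unfold Rsqr in Et, Eth.
  assert (Hr2 : r ^ 2 = x ^ 2 + y ^ 2).
  { unfold x, y; replace ((r * cos theta) ^ 2 + (r * sin theta) ^ 2)
      with (r ^ 2 * (sin theta * sin theta + cos theta * cos theta)) by ring.
    rewrite Eth; ring. }
  assert (Hden : 1 - 2 * r * cos (theta - t) + r ^ 2 = sqnorm (x - cos t) (y - sin t)).
  { rewrite cos_minus, Hr2; unfold sqnorm, x, y; nra. }
  assert (Hnum : 1 - r ^ 2 = - sqnorm (x - cos t) (y - sin t)
                             - 2 * (cos t * (x - cos t) + sin t * (y - sin t)))
    by (rewrite Hr2; unfold sqnorm; nra).
  unfold poisson, poisson_xy, inv_pow_kernel; rewrite Hden, Hnum; simpl re_inv_pow; simpl im_inv_pow.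
  field; exact Hn.
Qed.

Lemma poisson_pos r u : 0 <= r < 1 -> 0 < poisson r u.
Proof.
  intros Hr; unfold poisson; pose proof (COS_bound u) as [_ Hc].
  apply Rdiv_lt_0_compat; nra.
Qed.

Definition poisson_integral_kernel (I : R) (Phi : R -> R) (x y t : R) : R :=
  (I * poisson_xy x y PI / (2 * PI) - Phi t * poisson_xy_dt x y t) / (2 * PI).

Lemma harmonic_kernel_on_poisson_integral_kernel I Phi :
  continuous_R Phi -> harmonic_kernel_on unit_disc (poisson_integral_kernel I Phi).
Proof.
  intros HPhi.
  assert (Hpi := PI_RGT_0).
  replace (poisson_integral_kernel I Phi) with (fun x y t =>
    - I / (4 * PI ^ 2)
    + (inv_pow_kernel 1 (fun _ => - I / (2 * PI ^ 2) * cos PI) (fun _ => - I / (2 * PI ^ 2) * sin PI)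
         (fun _ => cos PI) (fun _ => sin PI) x y t
    + (inv_pow_kernel 1 (fun t => - Phi t * (2 * sin t) / (2 * PI))
         (fun t => - Phi t * (-2 * cos t) / (2 * PI)) cos sin x y t
    + inv_pow_kernel 2 (fun t => - Phi t * (4 * (cos t * sin t)) / (2 * PI))
         (fun t => - Phi t * (-2 * (cos t * cos t - sin t * sin t)) / (2 * PI)) cos sin x y t))).
  2: { apply functional_extensionality; intros x; apply functional_extensionality; intros y;
       apply functional_extensionality; intros t.
       unfold poisson_integral_kernel, poisson_xy, poisson_xy_dt, inv_pow_kernel.
       (* hiding the powers keeps [field] from unfolding them *)
       set (p1 := re_inv_pow 1 (x - cos PI) (y - sin PI)).
       set (q1 := im_inv_pow 1 (x - cos PI) (y - sin PI)).
       set (p2 := re_inv_pow 1 (x - cos t) (y - sin t)); set (q2 := im_inv_pow 1 (x - cos t) (y - sin t)).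
       set (p3 := re_inv_pow 2 (x - cos t) (y - sin t)); set (q3 := im_inv_pow 2 (x - cos t) (y - sin t)).
       field; lra. }
  assert (Hcircle : forall x y t, unit_disc x y -> sqnorm (x - cos t) (y - sin t) <> 0)
    by (intros; apply sqnorm_sub_circle_neq_0; auto).
  apply harmonic_kernel_on_plus; [apply harmonic_kernel_on_const |].
  apply harmonic_kernel_on_plus; [| apply harmonic_kernel_on_plus];
    apply harmonic_kernel_on_inv_pow_kernel; try solve [solve_continuous_R | exact Hcircle].
  intros x y t Hxy; apply sqnorm_sub_circle_neq_0, Hxy.
Qed.

Lemma RInt_poisson_integral_kernel I Phi x y : continuous_R Phi -> unit_disc x y ->
  RInt (poisson_integral_kernel I Phi x y) (- PI) PI
  = (I * poisson_xy x y PI - RInt (fun t => Phi t * poisson_xy_dt x y t) (- PI) PI) / (2 * PI).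
Proof.
  intros HPhi Hxy.
  assert (Hpi := PI_RGT_0).
  assert (Hex : ex_RInt (fun t => Phi t * poisson_xy_dt x y t) (- PI) PI).
  { apply ex_RInt_continuous_R; assert (Hdt := continuous_R_poisson_xy_dt x y Hxy).
    solve_continuous_R. }
  set (c := I * poisson_xy x y PI / (4 * PI ^ 2)).
  set (g := fun t => Phi t * poisson_xy_dt x y t).
  rewrite (RInt_ext_R (poisson_integral_kernel I Phi x y) (fun t => c + (- / (2 * PI)) * g t))
    by (intros; unfold poisson_integral_kernel, c, g; field; lra).
  rewrite (RInt_plus (fun _ => c) (fun t => (- / (2 * PI)) * g t));
    [| apply ex_RInt_const | apply (ex_RInt_scal g), Hex].
  rewrite (RInt_scal g), RInt_const by exact Hex.
  change (plus ?u ?v) with (u + v); change (scal ?u ?v) with (u * v).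
  match goal with |- ?l = ?r => change (@eq R l r) end.
  unfold c; field; lra.
Qed.

Theorem theorem10p2 (f : R * R -> R) :
  laplace_integrable (fun t => f (cos t, sin t)) (- PI) PI ->
  (forall r theta, 0 <= r < 1 -> - PI <= theta <= PI ->
     laplace_integrable (fun t => f (cos t, sin t) * poisson r (theta - t)) (- PI) PI)
  /\
  exists u : R -> R -> R,
    harmonic_on unit_disc u /\
    forall r theta I, 0 <= r < 1 -> - PI <= theta <= PI ->
      is_laplace_integral (fun t => f (cos t, sin t) * poisson r (theta - t)) (- PI) PI I ->
      u (r * cos theta) (r * sin theta) = I / (2 * PI).
Proof.
  intros [I HI].
  assert (Hpi := PI_RGT_0).
  destruct (is_laplace_integral_mul_smooth (- PI) PI _ I ltac:(lra) HI) as [Phi [HPhi Hparts]].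
  assert (Hpoisson : forall r theta, 0 <= r < 1 ->
    is_laplace_integral (fun t => f (cos t, sin t) * poisson r (theta - t)) (- PI) PI
      (I * poisson_xy (r * cos theta) (r * sin theta) PI
       - RInt (fun t => Phi t * poisson_xy_dt (r * cos theta) (r * sin theta) t) (- PI) PI)).
  { intros r theta Hr; pose proof (unit_disc_polar r theta Hr) as Hz.
    replace (fun t => f (cos t, sin t) * poisson r (theta - t))
      with (fun t => f (cos t, sin t) * poisson_xy (r * cos theta) (r * sin theta) t)
      by (apply functional_extensionality; intros t; rewrite poisson_polar; auto).
    apply Hparts; [intros; apply is_derive_poisson_xy, Hz | apply continuous_R_poisson_xy_dt, Hz |].
    intros t _; rewrite <- poisson_polar by exact Hr; apply poisson_pos, Hr. }
  split; [intros r theta Hr _; eexists; apply Hpoisson, Hr |].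
  exists (fun x y => RInt (poisson_integral_kernel I Phi x y) (- PI) PI); split.
  - apply harmonic_on_RInt; [lra | apply open_in_plane_unit_disc |].
    apply harmonic_kernel_on_poisson_integral_kernel, HPhi.
  - intros r theta J Hr _ HJ.
    rewrite (is_laplace_integral_unique _ _ _ _ _ HJ (Hpoisson r theta Hr)).
    apply RInt_poisson_integral_kernel; [exact HPhi | apply unit_disc_polar, Hr].
Qed.
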